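(* Let $R>1$ and $f\in H(\mathbb{D}_R)$. Then for any $r$ with $0<r<R$, \[\lim_{q\to1^+}L_q(f;z)=L_1(f;z)\] uniformly on $\{z:|z|\le r\}$.
   Context: $\mathbb{D}_R=\{z\in\mathbb{C}:|z|<R\}$, $H(\mathbb{D}_R)$ the analytic functions on it. For $p>0$, $p\ne1$, $D_pf(z)=\frac{f(pz)-f(z)}{(p-1)z}$ for $z\ne0$ and $D_pf(0)=f'(0)$. For $q>1$ and $|z|<R/q^2$, $L_q(f;z)=\frac{(1-z)\,q\,(D_qf(z)-D_{q^{-1}}f(z))}{q-1}$ (for any fixed $z$ this is defined for all $q>1$ close enough to $1$), and $L_1(f;z)=f''(z)\,z(1-z)$. *)

From Stdlib Require Import Reals.
From Coquelicot Require Import Coquelicot.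
Open Scope R_scope.

Definition holomorphic_on_disk (Rad : R) (f : C -> C) : Prop :=
  forall z : C, Cmod z < Rad -> @ex_derive C_AbsRing C_NormedModule f z.

Definition Dp (p : R) (f : C -> C) (z : C) : C :=
  if Req_EM_T (Cmod z) 0 then C_derive f z
  else Cdiv (Cminus (f (Cmult (RtoC p) z)) (f z)) (Cmult (RtoC (p - 1)) z).

Definition Lq (q : R) (f : C -> C) (z : C) : C :=
  Cdiv (Cmult (Cmult (Cminus (RtoC 1) z) (RtoC q))
              (Cminus (Dp q f z) (Dp (/ q) f z)))
       (RtoC (q - 1)).

Definition L1 (f : C -> C) (z : C) : C :=
  Cmult (Cmult (C_derive (C_derive f) z) z) (Cminus (RtoC 1) z).

(** The proof runs through Cauchy's integral formula on a circle of radius [rho] between [r]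
    and [Rad], derived from Goursat's lemma along the classical route: quadrisection of
    rectangles, a primitive on the disk built from horizontal and vertical segments, and the
    winding integral computed from explicit real antiderivatives.  The resulting kernel
    identities give, uniformly on [|z| <= r], the second-order Taylor estimate
    [|f (z + h) - f z - h f' z - h^2 f'' z / 2| <= A |h|^3] and a bound on [f''].
    For [z <> 0], [D_q f z] and [D_(1/q) f z] are difference quotients with steps
    [h1 = (q - 1) z] and [h2 = (1/q - 1) z]; in [L_q] the first-order terms cancel and
    [L_q f z - L_1 f z = (1 - z) ((q - 1)/2 z f'' z + q/(q - 1) (T h1 / h1 - T h2 / h2))],
    where [T] is the Taylor remainder, so the difference is [O(q - 1)] uniformly.
    At [z = 0] both operators vanish. *)

From Stdlib Require Import Reals Lra Psatz Classical.
From Coquelicot Require Import Coquelicot.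
Open Scope R_scope.

(** * Complex derivatives and continuity in epsilon-delta form *)

(** Concrete forms of Coquelicot's [is_derive] and [continuous] for functions into [C];
    all estimates below are carried out on them. *)

Definition cderiv (g : C -> C) (z l : C) : Prop :=
  forall eps, 0 < eps -> exists delta, 0 < delta /\
    forall w, Cmod (w - z) < delta -> Cmod (g w - g z - (w - z) * l) <= eps * Cmod (w - z).

Definition pderiv (g : R -> C) (t : R) (l : C) : Prop :=
  forall eps, 0 < eps -> exists delta, 0 < delta /\
    forall s, Rabs (s - t) < delta -> Cmod (g s - g t - RtoC (s - t) * l) <= eps * Rabs (s - t).

Definition ccont (g : C -> C) (z : C) : Prop :=
  forall eps, 0 < eps -> exists delta, 0 < delta /\
    forall w, Cmod (w - z) < delta -> Cmod (g w - g z) < eps.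

Definition pcont (g : R -> C) (t : R) : Prop :=
  forall eps, 0 < eps -> exists delta, 0 < delta /\
    forall s, Rabs (s - t) < delta -> Cmod (g s - g t) < eps.

Lemma norm_C_R (x : C) : @norm R_AbsRing C_R_NormedModule x = Cmod x.
Proof.
  unfold norm; simpl. unfold prod_norm, Cmod; simpl. unfold norm; simpl. unfold abs; simpl.
  f_equal. rewrite !Rmult_1_r, <- !Rabs_mult, !Rabs_pos_eq by nra. reflexivity.
Qed.

Lemma scal_C_R (x : R) (y : C) : @scal R_AbsRing C_R_NormedModule x y = (RtoC x * y)%C.
Proof.
  destruct y as [a b]. unfold scal; simpl. unfold prod_scal; simpl. unfold scal; simpl.
  unfold mult; simpl. unfold Cmult, RtoC; simpl. f_equal; ring.
Qed.

Lemma cderiv_of_is_derive g z l :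
  @is_derive C_AbsRing C_NormedModule g z l -> cderiv g z l.
Proof.
  intros [_ Hd] eps Heps.
  destruct (Hd z (fun P H => H) (mkposreal eps Heps)) as [d Hw].
  exists d. split; [apply cond_pos|]. intros w Hwz. exact (Hw w Hwz).
Qed.

Lemma is_derive_of_cderiv g z l :
  cderiv g z l -> @is_derive C_AbsRing C_NormedModule g z l.
Proof.
  intros H. split; [apply is_linear_scal_l|].
  intros x Hx.
  apply (@is_filter_lim_locally_unique _ (AbsRing_NormedModule C_AbsRing)) in Hx. subst x.
  intros [eps Heps]. destruct (H eps Heps) as [d [Hd Hw]].
  exists (mkposreal d Hd). exact Hw.
Qed.

(** The same two bridges for the ring [C] seen as a normed module over itself, where
    Coquelicot states [is_derive_mult], [is_derive_const] and [is_derive_id]. *)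

Lemma cderiv_of_is_derive_ring g z l :
  @is_derive C_AbsRing (AbsRing_NormedModule C_AbsRing) g z l -> cderiv g z l.
Proof.
  intros [_ Hd] eps Heps.
  destruct (Hd z (fun P H => H) (mkposreal eps Heps)) as [d Hw].
  exists d. split; [apply cond_pos|]. intros w Hwz. exact (Hw w Hwz).
Qed.

Lemma is_derive_ring_of_cderiv g z l :
  cderiv g z l -> @is_derive C_AbsRing (AbsRing_NormedModule C_AbsRing) g z l.
Proof.
  intros H. split; [apply is_linear_scal_l|].
  intros x Hx.
  apply (@is_filter_lim_locally_unique _ (AbsRing_NormedModule C_AbsRing)) in Hx. subst x.
  intros [eps Heps]. destruct (H eps Heps) as [d [Hd Hw]].
  exists (mkposreal d Hd). exact Hw.
Qed.

Lemma is_derive_of_pderiv g t l :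
  pderiv g t l -> @is_derive R_AbsRing C_R_NormedModule g t l.
Proof.
  intros H. split; [apply is_linear_scal_l|].
  intros x Hx.
  apply (@is_filter_lim_locally_unique _ (AbsRing_NormedModule R_AbsRing)) in Hx. subst x.
  intros [eps Heps]. destruct (H eps Heps) as [d [Hd Hw]].
  exists (mkposreal d Hd). intros s Hs. simpl.
  rewrite !norm_C_R, scal_C_R. exact (Hw s Hs).
Qed.

Lemma continuous_of_pcont g t : pcont g t -> @continuous R_UniformSpace C_UniformSpace g t.
Proof.
  intros H P [eps HP].
  destruct (H eps (cond_pos eps)) as [d [Hd Hs]].
  exists (mkposreal d Hd). intros s Hs'. apply HP.
  apply C_NormedModule_mixin_compat1. exact (Hs s Hs').
Qed.

Lemma cderiv_C_derive f z :
  @ex_derive C_AbsRing C_NormedModule f z -> cderiv f z (C_derive f z).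
Proof. intros H. apply cderiv_of_is_derive. apply C_derive_correct; auto. Qed.

Lemma C_derive_of_cderiv f z l : cderiv f z l -> C_derive f z = l.
Proof. intros H. apply is_C_derive_unique, is_derive_of_cderiv, H. Qed.

Lemma cderiv_plus f g z a b :
  cderiv f z a -> cderiv g z b -> cderiv (fun w => f w + g w)%C z (a + b)%C.
Proof.
  intros H1 H2. apply cderiv_of_is_derive.
  apply (@is_derive_plus C_AbsRing C_NormedModule f g z a b); apply is_derive_of_cderiv; auto.
Qed.

Lemma cderiv_mult f g z a b :
  cderiv f z a -> cderiv g z b -> cderiv (fun w => f w * g w)%C z (a * g z + f z * b)%C.
Proof.
  intros H1 H2. apply cderiv_of_is_derive_ring.
  apply (@is_derive_mult C_AbsRing f g z a b); try (apply is_derive_ring_of_cderiv; auto).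
  intros. apply Cmult_comm.
Qed.

Lemma cderiv_const c z : cderiv (fun _ => c) z 0%C.
Proof.
  apply cderiv_of_is_derive_ring.
  exact (@is_derive_const C_AbsRing (AbsRing_NormedModule C_AbsRing) c z).
Qed.

Lemma cderiv_id z : cderiv (fun w => w) z 1%C.
Proof. apply cderiv_of_is_derive_ring. exact (@is_derive_id C_AbsRing z). Qed.

Lemma cderiv_ext f g z l : (forall w, f w = g w) -> cderiv f z l -> cderiv g z l.
Proof.
  intros E H eps Heps. destruct (H eps Heps) as [d [Hd H']].
  exists d; split; auto. intros w Hw. rewrite <- !E. auto.
Qed.

Lemma cderiv_ext_val f g z l l' :
  (forall w, f w = g w) -> l = l' -> cderiv f z l -> cderiv g z l'.
Proof. intros E <-. apply cderiv_ext, E. Qed.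

Lemma cderiv_ext_loc f g z l r : 0 < r -> (forall w, Cmod (w - z) < r -> f w = g w) ->
  cderiv f z l -> cderiv g z l.
Proof.
  intros Hr E H eps Heps. destruct (H eps Heps) as [d [Hd H']].
  exists (Rmin d r); split; [apply Rmin_pos; auto|].
  intros w Hw.
  assert (Hwd : Cmod (w - z) < d) by (eapply Rlt_le_trans; [exact Hw|apply Rmin_l]).
  assert (Hwr : Cmod (w - z) < r) by (eapply Rlt_le_trans; [exact Hw|apply Rmin_r]).
  rewrite <- (E w Hwr), <- (E z); auto.
  replace (z - z)%C with (RtoC 0) by ring. rewrite Cmod_0. exact Hr.
Qed.

Lemma cderiv_affine (a b p w : C) : cderiv (fun v => a + b * (v - p))%C w b.
Proof.
  assert (H := cderiv_plus _ _ w _ _ (cderiv_const a w)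
    (cderiv_mult _ _ w _ _ (cderiv_const b w) (cderiv_plus _ _ w _ _ (cderiv_id w) (cderiv_const (- p) w)))).
  cbv beta in H. replace (0 + (0 * (w + - p) + b * (1 + 0)))%C with b in H by ring.
  revert H. apply cderiv_ext. intros; ring.
Qed.

Lemma Cmod_rev_triangle x y : Cmod x - Cmod y <= Cmod (x - y).
Proof.
  replace x with ((x - y) + y)%C at 1 by ring.
  pose proof (Cmod_triangle (x - y) y). lra.
Qed.

Lemma Cmod_le_re_im (w : C) : Cmod w <= Rabs (fst w) + Rabs (snd w).
Proof.
  destruct w as [a b]. unfold Cmod; simpl.
  pose proof (Rabs_pos a); pose proof (Rabs_pos b).
  rewrite <- (sqrt_square (Rabs a + Rabs b)) by lra.
  apply sqrt_le_1_alt.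
  replace (a * (a * 1)) with (Rabs a * Rabs a) by (rewrite <- Rabs_mult, Rabs_pos_eq by nra; ring).
  replace (b * (b * 1)) with (Rabs b * Rabs b) by (rewrite <- Rabs_mult, Rabs_pos_eq by nra; ring).
  nra.
Qed.

Lemma RtoC_neq0 (x : R) : x <> 0 -> RtoC x <> RtoC 0.
Proof. intros Hx E. apply Hx. now injection E. Qed.

Lemma Cminus_neq0 (w z : C) : w <> z -> (w - z)%C <> RtoC 0.
Proof. intros H E. apply H. replace w with ((w - z) + z)%C by ring. rewrite E. ring. Qed.

Lemma Cmod_minus_gt0 (w z : C) : w <> z -> 0 < Cmod (w - z).
Proof. intros H. apply Cmod_gt_0, Cminus_neq0, H. Qed.

Lemma Cmod_minus_eq0 (w z : C) : Cmod (w - z) = 0 -> w = z.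
Proof. intros H. apply Cmod_eq_0 in H. replace w with ((w - z) + z)%C by ring. rewrite H. ring. Qed.

Lemma ccont_of_cderiv g z l : cderiv g z l -> ccont g z.
Proof.
  intros H eps Heps.
  destruct (H 1 Rlt_0_1) as [d [Hd H1]].
  exists (Rmin d (eps / (Cmod l + 2))). split.
  { apply Rmin_pos; auto. apply Rdiv_lt_0_compat; auto. pose proof (Cmod_ge_0 l); lra. }
  intros w Hw.
  assert (Hw1 : Cmod (w - z) < d) by (eapply Rlt_le_trans; [exact Hw|apply Rmin_l]).
  assert (Hw2 : Cmod (w - z) < eps / (Cmod l + 2)) by (eapply Rlt_le_trans; [exact Hw|apply Rmin_r]).
  specialize (H1 w Hw1).
  replace (g w - g z)%C with ((g w - g z - (w - z) * l) + (w - z) * l)%C by ring.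
  eapply Rle_lt_trans; [apply Cmod_triangle|]. rewrite Cmod_mult.
  pose proof (Cmod_ge_0 l). pose proof (Cmod_ge_0 (w - z)).
  apply (Rmult_lt_compat_l (Cmod l + 2)) in Hw2; [|lra].
  replace ((Cmod l + 2) * (eps / (Cmod l + 2))) with eps in Hw2 by (field; lra).
  nra.
Qed.

Lemma pcont_of_pderiv g t l : pderiv g t l -> pcont g t.
Proof.
  intros H eps Heps.
  destruct (H 1 Rlt_0_1) as [d [Hd H1]].
  exists (Rmin d (eps / (Cmod l + 2))). split.
  { apply Rmin_pos; auto. apply Rdiv_lt_0_compat; auto. pose proof (Cmod_ge_0 l); lra. }
  intros s Hs.
  assert (Hs1 : Rabs (s - t) < d) by (eapply Rlt_le_trans; [exact Hs|apply Rmin_l]).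
  assert (Hs2 : Rabs (s - t) < eps / (Cmod l + 2)) by (eapply Rlt_le_trans; [exact Hs|apply Rmin_r]).
  specialize (H1 s Hs1).
  replace (g s - g t)%C with ((g s - g t - RtoC (s - t) * l) + RtoC (s - t) * l)%C by ring.
  eapply Rle_lt_trans; [apply Cmod_triangle|]. rewrite Cmod_mult, Cmod_R.
  pose proof (Cmod_ge_0 l). pose proof (Rabs_pos (s - t)).
  apply (Rmult_lt_compat_l (Cmod l + 2)) in Hs2; [|lra].
  replace ((Cmod l + 2) * (eps / (Cmod l + 2))) with eps in Hs2 by (field; lra).
  nra.
Qed.

Lemma pcont_comp (g : C -> C) (gam : R -> C) t :
  pcont gam t -> ccont g (gam t) -> pcont (fun s => g (gam s)) t.
Proof.
  intros H1 H2 eps Heps.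
  destruct (H2 eps Heps) as [d [Hd H2']].
  destruct (H1 d Hd) as [d' [Hd' H1']].
  exists d'. split; auto.
Qed.

Lemma ccont_const c z : ccont (fun _ => c) z.
Proof.
  intros e He. exists 1. split; [lra|]. intros.
  replace (c - c)%C with (RtoC 0) by ring. rewrite Cmod_0. exact He.
Qed.

Lemma ccont_id z : ccont (fun w => w) z.
Proof. intros e He. exists e. split; auto. Qed.

Lemma ccont_minus f g z : ccont f z -> ccont g z -> ccont (fun w => f w - g w)%C z.
Proof.
  intros H1 H2 e He.
  destruct (H1 (e / 2)) as [d1 [Hd1 K1]]; [lra|].
  destruct (H2 (e / 2)) as [d2 [Hd2 K2]]; [lra|].
  exists (Rmin d1 d2). split; [apply Rmin_pos; auto|]. intros w Hw.
  assert (Hw1 : Cmod (w - z) < d1) by (eapply Rlt_le_trans; [exact Hw|apply Rmin_l]).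
  assert (Hw2 : Cmod (w - z) < d2) by (eapply Rlt_le_trans; [exact Hw|apply Rmin_r]).
  specialize (K1 w Hw1). specialize (K2 w Hw2).
  replace (f w - g w - (f z - g z))%C with ((f w - f z) + - (g w - g z))%C by ring.
  eapply Rle_lt_trans; [apply Cmod_triangle|]. rewrite Cmod_opp. lra.
Qed.

Lemma ccont_mult f g z : ccont f z -> ccont g z -> ccont (fun w => f w * g w)%C z.
Proof.
  intros Hf Hg eps Heps.
  pose proof (Cmod_ge_0 (f z)) as Pf. pose proof (Cmod_ge_0 (g z)) as Pg.
  destruct (Hg 1 Rlt_0_1) as [d0 [Hd0 H0]].
  destruct (Hf (eps / (2 * (Cmod (g z) + 1)))) as [d1 [Hd1 H1]]; [apply Rdiv_lt_0_compat; lra|].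
  destruct (Hg (eps / (2 * (Cmod (f z) + 1)))) as [d2 [Hd2 H2]]; [apply Rdiv_lt_0_compat; lra|].
  exists (Rmin d0 (Rmin d1 d2)). split; [repeat apply Rmin_pos; auto|].
  intros w Hw.
  assert (Hw0 : Cmod (w - z) < d0) by (eapply Rlt_le_trans; [exact Hw|apply Rmin_l]).
  assert (Hw1 : Cmod (w - z) < d1)
    by (eapply Rlt_le_trans; [exact Hw|eapply Rle_trans; [apply Rmin_r|apply Rmin_l]]).
  assert (Hw2 : Cmod (w - z) < d2)
    by (eapply Rlt_le_trans; [exact Hw|eapply Rle_trans; [apply Rmin_r|apply Rmin_r]]).
  specialize (H0 w Hw0). specialize (H1 w Hw1). specialize (H2 w Hw2).
  assert (Hgw : Cmod (g w) <= Cmod (g z) + 1).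
  { replace (g w) with ((g w - g z) + g z)%C by ring.
    eapply Rle_trans; [apply Cmod_triangle|]. lra. }
  replace (f w * g w - f z * g z)%C with ((f w - f z) * g w + f z * (g w - g z))%C by ring.
  eapply Rle_lt_trans; [apply Cmod_triangle|]. rewrite !Cmod_mult.
  pose proof (Cmod_ge_0 (f w - f z)). pose proof (Cmod_ge_0 (g w - g z)).
  assert (A1 : Cmod (f w - f z) * Cmod (g w) <= eps / 2).
  { apply Rle_trans with (eps / (2 * (Cmod (g z) + 1)) * (Cmod (g z) + 1)).
    - apply Rmult_le_compat; try lra. apply Cmod_ge_0.
    - right. field. lra. }
  assert (A2 : Cmod (f z) * Cmod (g w - g z) < eps / 2).
  { apply Rle_lt_trans with (Cmod (f z) * (eps / (2 * (Cmod (f z) + 1)))).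
    - apply Rmult_le_compat_l; lra.
    - apply Rle_lt_trans with ((Cmod (f z) / (Cmod (f z) + 1)) * (eps / 2)); [right; field; lra|].
      assert (Cmod (f z) / (Cmod (f z) + 1) < 1).
      { apply Rmult_lt_reg_r with (Cmod (f z) + 1); [lra|]. field_simplify; lra. }
      nra. }
  lra.
Qed.

Lemma pderiv_comp (g : C -> C) (gam : R -> C) t l L :
  cderiv g (gam t) l -> pderiv gam t L -> pderiv (fun s => g (gam s)) t (l * L).
Proof.
  intros Hg Hgam eps Heps.
  pose proof (Cmod_ge_0 L) as HL. pose proof (Cmod_ge_0 l) as Hl.
  set (e1 := eps / (2 * (Cmod L + 1))). set (e2 := eps / (2 * (Cmod l + 1))).
  assert (He1 : 0 < e1) by (unfold e1; apply Rdiv_lt_0_compat; lra).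
  assert (He2 : 0 < e2) by (unfold e2; apply Rdiv_lt_0_compat; lra).
  destruct (Hgam 1 Rlt_0_1) as [d1 [Hd1 H1]].
  destruct (Hg e1 He1) as [d2 [Hd2 H2]].
  destruct (Hgam e2 He2) as [d3 [Hd3 H3]].
  exists (Rmin d1 (Rmin d3 (d2 / (Cmod L + 1)))). split.
  { apply Rmin_pos; auto. apply Rmin_pos; auto. apply Rdiv_lt_0_compat; lra. }
  intros s Hs.
  assert (Hs1 : Rabs (s - t) < d1) by (eapply Rlt_le_trans; [exact Hs|apply Rmin_l]).
  assert (Hs3 : Rabs (s - t) < d3)
    by (eapply Rlt_le_trans; [exact Hs|eapply Rle_trans; [apply Rmin_r|apply Rmin_l]]).
  assert (Hs2 : Rabs (s - t) < d2 / (Cmod L + 1))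
    by (eapply Rlt_le_trans; [exact Hs|eapply Rle_trans; [apply Rmin_r|apply Rmin_r]]).
  specialize (H1 s Hs1). specialize (H3 s Hs3).
  assert (Lip : Cmod (gam s - gam t) <= (Cmod L + 1) * Rabs (s - t)).
  { replace (gam s - gam t)%C with ((gam s - gam t - RtoC (s - t) * L) + RtoC (s - t) * L)%C by ring.
    eapply Rle_trans; [apply Cmod_triangle|]. rewrite Cmod_mult, Cmod_R. nra. }
  assert (Hg2 : Cmod (gam s - gam t) < d2).
  { apply (Rmult_lt_compat_l (Cmod L + 1)) in Hs2; [|lra].
    replace ((Cmod L + 1) * (d2 / (Cmod L + 1))) with d2 in Hs2 by (field; lra). lra. }
  specialize (H2 _ Hg2).
  replace (g (gam s) - g (gam t) - RtoC (s - t) * (l * L))%C with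
    ((g (gam s) - g (gam t) - (gam s - gam t) * l) + l * (gam s - gam t - RtoC (s - t) * L))%C by ring.
  eapply Rle_trans; [apply Cmod_triangle|]. rewrite Cmod_mult.
  pose proof (Rabs_pos (s - t)).
  assert (e1 * Cmod (gam s - gam t) <= eps / 2 * Rabs (s - t)).
  { apply Rle_trans with (e1 * ((Cmod L + 1) * Rabs (s - t))); [apply Rmult_le_compat_l; lra|].
    unfold e1. right. field. lra. }
  assert (Cmod l * Cmod (gam s - gam t - RtoC (s - t) * L) <= eps / 2 * Rabs (s - t)).
  { apply Rle_trans with (Cmod l * (e2 * Rabs (s - t))); [apply Rmult_le_compat_l; lra|].
    apply Rle_trans with ((Cmod l / (Cmod l + 1)) * (eps / 2) * Rabs (s - t));
      [unfold e2; right; field; lra|].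
    apply Rmult_le_compat_r; auto.
    assert (Cmod l / (Cmod l + 1) <= 1).
    { apply Rmult_le_reg_r with (Cmod l + 1); [lra|]. field_simplify; lra. }
    nra. }
  lra.
Qed.

Lemma cderiv_inv (z : C) : z <> RtoC 0 -> cderiv (fun w => / w)%C z (- / (z * z))%C.
Proof.
  intros Hz eps Heps.
  assert (Hm : 0 < Cmod z) by (apply Cmod_gt_0, Hz).
  assert (Hm3 : 0 < Cmod z * Cmod z * Cmod z) by (repeat apply Rmult_lt_0_compat; auto).
  exists (Rmin (Cmod z / 2) (eps * (Cmod z * Cmod z * Cmod z) / 2)).
  split; [apply Rmin_pos; [lra|apply Rdiv_lt_0_compat; [apply Rmult_lt_0_compat|]; lra]|].
  intros w Hw.
  assert (Hw1 : Cmod (w - z) < Cmod z / 2) by (eapply Rlt_le_trans; [exact Hw|apply Rmin_l]).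
  assert (Hw2 : Cmod (w - z) < eps * (Cmod z * Cmod z * Cmod z) / 2)
    by (eapply Rlt_le_trans; [exact Hw|apply Rmin_r]).
  assert (Hwz : Cmod z / 2 <= Cmod w).
  { pose proof (Cmod_rev_triangle z w). replace (z - w)%C with (- (w - z))%C in H by ring.
    rewrite Cmod_opp in H. lra. }
  assert (Hw0 : w <> 0%C) by (intros ->; rewrite Cmod_0 in Hwz; lra).
  replace (/ w - / z - (w - z) * - / (z * z))%C with ((w - z) * (w - z) / (w * (z * z)))%C
    by (field; auto).
  rewrite Cmod_div by (repeat apply Cmult_neq_0; auto). rewrite !Cmod_mult.
  pose proof (Cmod_ge_0 (w - z)).
  apply Rle_trans with (Cmod (w - z) * Cmod (w - z) / (Cmod z / 2 * (Cmod z * Cmod z))).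
  { unfold Rdiv. apply Rmult_le_compat_l; [nra|].
    apply Rinv_le_contravar; [nra|]. apply Rmult_le_compat_r; nra. }
  apply Rle_trans with (Cmod (w - z) * (eps * (Cmod z * Cmod z * Cmod z) / 2)
    / (Cmod z / 2 * (Cmod z * Cmod z))).
  { unfold Rdiv. apply Rmult_le_compat_r; [apply Rlt_le, Rinv_0_lt_compat; nra|].
    apply Rmult_le_compat_l; nra. }
  right. field. lra.
Qed.

Lemma cderiv_inv_sub a w : w <> a -> cderiv (fun v => / (v - a))%C w (- / ((w - a) * (w - a)))%C.
Proof.
  intros H eps Heps.
  destruct (cderiv_inv (w - a) (Cminus_neq0 _ _ H) eps Heps) as [d [Hd H']].
  exists d. split; auto. intros v Hv.
  replace (v - w)%C with (v - a - (w - a))%C by ring. apply H'.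
  replace (v - a - (w - a))%C with (v - w)%C by ring. exact Hv.
Qed.

Lemma ccont_inv_sub a w : w <> a -> ccont (fun v => / (v - a))%C w.
Proof. intros H. eapply ccont_of_cderiv, cderiv_inv_sub, H. Qed.

Lemma Cmod_mult_le a b A B : Cmod a <= A -> Cmod b <= B -> Cmod (a * b) <= A * B.
Proof.
  intros Ha Hb. rewrite Cmod_mult. pose proof (Cmod_ge_0 a). pose proof (Cmod_ge_0 b).
  apply Rmult_le_compat; auto.
Qed.

Lemma cderiv_of_quadratic_bound g z l eta K : 0 < eta -> 0 <= K ->
  (forall h, Cmod h <= eta -> Cmod (g (z + h) - g z - h * l)%C <= K * Cmod h ^ 2) -> cderiv g z l.
Proof.
  intros He HK H eps Heps.
  exists (Rmin eta (eps / (K + 1))). split; [apply Rmin_pos; auto; apply Rdiv_lt_0_compat; lra|].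
  intros w Hw.
  assert (Hw1 : Cmod (w - z) <= eta) by (left; eapply Rlt_le_trans; [exact Hw|apply Rmin_l]).
  assert (Hw2 : Cmod (w - z) < eps / (K + 1)) by (eapply Rlt_le_trans; [exact Hw|apply Rmin_r]).
  specialize (H (w - z)%C Hw1). replace (z + (w - z))%C with w in H by ring.
  eapply Rle_trans; [exact H|].
  pose proof (Cmod_ge_0 (w - z)).
  assert (K * Cmod (w - z) <= eps).
  { apply Rle_trans with ((K + 1) * (eps / (K + 1))); [apply Rmult_le_compat; lra|right; field; lra]. }
  simpl. nra.
Qed.

(** * Integrals of complex-valued functions of a real variable *)

Definition CInt (g : R -> C) (a b : R) : C := @RInt C_R_CompleteNormedModule g a b.
Definition ex_CInt (g : R -> C) (a b : R) : Prop := @ex_RInt C_R_NormedModule g a b.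
Definition is_CInt (g : R -> C) (a b : R) (l : C) : Prop := @is_RInt C_R_NormedModule g a b l.

Lemma CInt_correct g a b : ex_CInt g a b -> is_CInt g a b (CInt g a b).
Proof. intros H. apply (@RInt_correct C_R_CompleteNormedModule), H. Qed.

Lemma is_CInt_unique g a b l : is_CInt g a b l -> CInt g a b = l.
Proof. intros H. apply (@is_RInt_unique C_R_CompleteNormedModule), H. Qed.

Lemma is_CInt_scal g a b l c : is_CInt g a b l -> is_CInt (fun x => c * g x)%C a b (c * l)%C.
Proof.
  intros H.
  assert (H1 := is_RInt_fct_extend_fst g a b l H).
  assert (H2 := is_RInt_fct_extend_snd g a b l H).
  destruct c as [c1 c2], l as [l1 l2].
  assert (K1 := @is_RInt_minus R_NormedModule _ _ a b _ _
    (@is_RInt_scal R_NormedModule _ a b c1 _ H1) (@is_RInt_scal R_NormedModule _ a b c2 _ H2)).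
  assert (K2 := @is_RInt_plus R_NormedModule _ _ a b _ _
    (@is_RInt_scal R_NormedModule _ a b c1 _ H2) (@is_RInt_scal R_NormedModule _ a b c2 _ H1)).
  exact (is_RInt_fct_extend_pair (fun x => ((c1, c2) * g x)%C) a b _ _ K1 K2).
Qed.

Lemma CInt_scal g a b c : ex_CInt g a b -> CInt (fun x => c * g x)%C a b = (c * CInt g a b)%C.
Proof. intros H. apply is_CInt_unique, is_CInt_scal, CInt_correct, H. Qed.

Lemma CInt_minus f g a b : ex_CInt f a b -> ex_CInt g a b ->
  CInt (fun x => f x - g x)%C a b = (CInt f a b - CInt g a b)%C.
Proof. intros H1 H2. apply (@RInt_minus C_R_CompleteNormedModule); auto. Qed.

Lemma CInt_Chasles f a b c : ex_CInt f a b -> ex_CInt f b c ->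
  (CInt f a b + CInt f b c)%C = CInt f a c.
Proof. intros H1 H2. apply (@RInt_Chasles C_R_CompleteNormedModule); auto. Qed.

Lemma CInt_point f a : CInt f a a = 0%C.
Proof. apply (@RInt_point C_R_CompleteNormedModule). Qed.

Lemma CInt_swap f a b : ex_CInt f a b -> CInt f b a = (- CInt f a b)%C.
Proof. intros H. symmetry. apply (@opp_RInt_swap C_R_CompleteNormedModule), H. Qed.

Lemma CInt_ext f g a b :
  (forall x, Rmin a b < x < Rmax a b -> f x = g x) -> CInt f a b = CInt g a b.
Proof. intros H. apply (@RInt_ext C_R_CompleteNormedModule), H. Qed.

Lemma CInt_const k a b : CInt (fun _ => k) a b = (RtoC (b - a) * k)%C.
Proof. apply is_CInt_unique. rewrite <- scal_C_R. apply (@is_RInt_const C_R_NormedModule). Qed.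

Lemma CInt_norm_le g a b M : a <= b -> (forall x, a <= x <= b -> Cmod (g x) <= M) ->
  ex_CInt g a b -> Cmod (CInt g a b) <= (b - a) * M.
Proof.
  intros Hab HM Hex. rewrite <- norm_C_R.
  apply (@norm_RInt_le_const C_R_NormedModule g a b _ M Hab).
  - intros x Hx. rewrite norm_C_R. auto.
  - apply CInt_correct, Hex.
Qed.

Lemma CInt_norm_le_abs f a b M : (forall x, Rmin a b <= x <= Rmax a b -> Cmod (f x) <= M) ->
  ex_CInt f a b -> Cmod (CInt f a b) <= Rabs (b - a) * M.
Proof.
  intros HM Hex. destruct (Rle_dec a b) as [Hab|Hab].
  - rewrite Rabs_pos_eq by lra. apply CInt_norm_le; auto.
    intros x Hx. apply HM. rewrite Rmin_left, Rmax_right by lra. auto.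
  - rewrite CInt_swap by (apply ex_RInt_swap, Hex). rewrite Cmod_opp, Rabs_left by lra.
    replace (- (b - a)) with (a - b) by ring.
    apply CInt_norm_le; [lra| |apply ex_RInt_swap, Hex].
    intros x Hx. apply HM. rewrite Rmin_right, Rmax_left by lra. auto.
Qed.

Lemma ex_CInt_continuous g a b :
  (forall x, Rmin a b <= x <= Rmax a b -> pcont g x) -> ex_CInt g a b.
Proof.
  intros H. apply (@ex_RInt_continuous C_R_CompleteNormedModule).
  intros z Hz. apply continuous_of_pcont. auto.
Qed.

Lemma CInt_derive (F g : R -> C) a b :
  (forall x, Rmin a b <= x <= Rmax a b -> pderiv F x (g x)) ->
  (forall x, Rmin a b <= x <= Rmax a b -> pcont g x) ->
  CInt g a b = (F b - F a)%C.
Proof.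
  intros H1 H2. apply is_CInt_unique.
  apply (@is_RInt_derive C_R_CompleteNormedModule F g a b).
  - intros x Hx. apply is_derive_of_pderiv. auto.
  - intros x Hx. apply continuous_of_pcont. auto.
Qed.

Lemma pcont_bounded g a b : a <= b -> (forall t, a <= t <= b -> pcont g t) ->
  exists M, 0 <= M /\ forall t, a <= t <= b -> Cmod (g t) <= M.
Proof.
  intros Hab H.
  destruct (continuity_ab_maj (fun t => Cmod (g t)) a b Hab) as [tM [HM _]].
  { intros c Hc. apply continuity_pt_filterlim. intros P [eps HP].
    destruct (H c Hc eps (cond_pos eps)) as [d [Hd Hd']].
    exists (mkposreal d Hd). intros s Hs. apply HP.
    specialize (Hd' s Hs). unfold ball; simpl. unfold AbsRing_ball, abs, minus, plus, opp; simpl.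
    pose proof (Cmod_rev_triangle (g s) (g c)). pose proof (Cmod_rev_triangle (g c) (g s)).
    replace (g c - g s)%C with (- (g s - g c))%C in H1 by ring. rewrite Cmod_opp in H1.
    apply Rabs_lt_between'. lra. }
  exists (Cmod (g tM)). split; [apply Cmod_ge_0|auto].
Qed.

(** * Integrals over boundaries of rectangles *)

Definition hseg_int (g : C -> C) (c a b : R) : C := CInt (fun x => g (x, c)) a b.
Definition vseg_int (g : C -> C) (x c d : R) : C := CInt (fun y => g (x, y)) c d.

Definition rect_int (g : C -> C) (a b c d : R) : C :=
  (hseg_int g c a b + Ci * vseg_int g b c d - hseg_int g d a b - Ci * vseg_int g a c d)%C.

Definition in_rect (a b c d : R) (w : C) : Prop := a <= fst w <= b /\ c <= snd w <= d.

Definition rect_integrable (g : C -> C) (a b c d : R) : Prop :=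
  ex_CInt (fun x => g (x, c)) a b /\ ex_CInt (fun x => g (x, d)) a b /\
  ex_CInt (fun y => g (a, y)) c d /\ ex_CInt (fun y => g (b, y)) c d.

Lemma pderiv_hseg c t : pderiv (fun x => (x, c)) t 1%C.
Proof.
  intros eps Heps. exists 1. split; [lra|]. intros s _.
  replace ((s, c) - (t, c) - RtoC (s - t) * 1)%C with (RtoC 0)
    by (unfold Cminus, Cplus, Copp, Cmult, RtoC; simpl; f_equal; ring).
  rewrite Cmod_0. pose proof (Rabs_pos (s - t)). nra.
Qed.

Lemma pderiv_vseg x t : pderiv (fun y => (x, y)) t Ci.
Proof.
  intros eps Heps. exists 1. split; [lra|]. intros s _.
  replace ((x, s) - (x, t) - RtoC (s - t) * Ci)%C with (RtoC 0)
    by (unfold Cminus, Cplus, Copp, Cmult, RtoC, Ci; simpl; f_equal; ring).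
  rewrite Cmod_0. pose proof (Rabs_pos (s - t)). nra.
Qed.

Lemma ex_CInt_hseg g c a b : (forall x, Rmin a b <= x <= Rmax a b -> ccont g (x, c)) ->
  ex_CInt (fun x => g (x, c)) a b.
Proof.
  intros H. apply ex_CInt_continuous. intros x Hx.
  apply (pcont_comp g (fun x => (x, c))); [eapply pcont_of_pderiv, pderiv_hseg|auto].
Qed.

Lemma ex_CInt_vseg g x c d : (forall y, Rmin c d <= y <= Rmax c d -> ccont g (x, y)) ->
  ex_CInt (fun y => g (x, y)) c d.
Proof.
  intros H. apply ex_CInt_continuous. intros y Hy.
  apply (pcont_comp g (fun y => (x, y))); [eapply pcont_of_pderiv, pderiv_vseg|auto].
Qed.

Lemma rect_integrable_of_ccont g a b c d : a <= b -> c <= d ->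
  (forall w, in_rect a b c d w -> ccont g w) -> rect_integrable g a b c d.
Proof.
  intros Hab Hcd H. unfold in_rect in H.
  rewrite ?Rmin_left, ?Rmax_right in * by lra.
  repeat split; [apply ex_CInt_hseg|apply ex_CInt_hseg|apply ex_CInt_vseg|apply ex_CInt_vseg];
    rewrite ?Rmin_left, ?Rmax_right by lra; intros; apply H; simpl; lra.
Qed.

Lemma rect_int_splitX g a m b c d :
  ex_CInt (fun x => g (x, c)) a m -> ex_CInt (fun x => g (x, c)) m b ->
  ex_CInt (fun x => g (x, d)) a m -> ex_CInt (fun x => g (x, d)) m b ->
  rect_int g a b c d = (rect_int g a m c d + rect_int g m b c d)%C.
Proof.
  intros H1 H2 H3 H4. unfold rect_int, hseg_int.
  rewrite <- (CInt_Chasles _ a m b H1 H2), <- (CInt_Chasles _ a m b H3 H4). ring.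
Qed.

Lemma rect_int_splitY g a b c n d :
  ex_CInt (fun y => g (a, y)) c n -> ex_CInt (fun y => g (a, y)) n d ->
  ex_CInt (fun y => g (b, y)) c n -> ex_CInt (fun y => g (b, y)) n d ->
  rect_int g a b c d = (rect_int g a b c n + rect_int g a b n d)%C.
Proof.
  intros H1 H2 H3 H4. unfold rect_int, vseg_int.
  rewrite <- (CInt_Chasles _ c n d H1 H2), <- (CInt_Chasles _ c n d H3 H4). ring.
Qed.

Lemma rect_int_degX g a c d : rect_int g a a c d = RtoC 0.
Proof. unfold rect_int, hseg_int. rewrite !CInt_point. ring. Qed.

Lemma rect_int_degY g a b c : rect_int g a b c c = RtoC 0.
Proof. unfold rect_int, vseg_int. rewrite !CInt_point. ring. Qed.

Lemma rect_int_swapX g a b c d :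
  ex_CInt (fun x => g (x, c)) a b -> ex_CInt (fun x => g (x, d)) a b ->
  rect_int g b a c d = (- rect_int g a b c d)%C.
Proof. intros H1 H2. unfold rect_int, hseg_int. rewrite (CInt_swap _ a b H1), (CInt_swap _ a b H2). ring. Qed.

Lemma rect_int_swapY g a b c d :
  ex_CInt (fun y => g (a, y)) c d -> ex_CInt (fun y => g (b, y)) c d ->
  rect_int g a b d c = (- rect_int g a b c d)%C.
Proof. intros H1 H2. unfold rect_int, vseg_int. rewrite (CInt_swap _ c d H1), (CInt_swap _ c d H2). ring. Qed.

Lemma rect_int_minus g h a b c d : rect_integrable g a b c d -> rect_integrable h a b c d ->
  rect_int (fun w => g w - h w)%C a b c d = (rect_int g a b c d - rect_int h a b c d)%C.
Proof.
  intros [I1 [I2 [I3 I4]]] [J1 [J2 [J3 J4]]]. unfold rect_int, hseg_int, vseg_int. cbv beta.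
  rewrite (CInt_minus (fun x => g (x, c)) (fun x => h (x, c)) a b I1 J1),
    (CInt_minus (fun x => g (x, d)) (fun x => h (x, d)) a b I2 J2),
    (CInt_minus (fun y => g (a, y)) (fun y => h (a, y)) c d I3 J3),
    (CInt_minus (fun y => g (b, y)) (fun y => h (b, y)) c d I4 J4).
  ring.
Qed.

Lemma rect_int_norm_le g a b c d M : a <= b -> c <= d -> rect_integrable g a b c d ->
  (forall w, in_rect a b c d w -> Cmod (g w) <= M) ->
  Cmod (rect_int g a b c d) <= 2 * ((b - a) + (d - c)) * M.
Proof.
  intros Hab Hcd [I1 [I2 [I3 I4]]] HM. unfold rect_int, hseg_int, vseg_int, in_rect in *.
  assert (B1 : Cmod (CInt (fun x => g (x, c)) a b) <= (b - a) * M)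
    by (apply CInt_norm_le; auto; intros; apply HM; simpl; lra).
  assert (B2 : Cmod (CInt (fun x => g (x, d)) a b) <= (b - a) * M)
    by (apply CInt_norm_le; auto; intros; apply HM; simpl; lra).
  assert (B3 : Cmod (CInt (fun y => g (a, y)) c d) <= (d - c) * M)
    by (apply CInt_norm_le; auto; intros; apply HM; simpl; lra).
  assert (B4 : Cmod (CInt (fun y => g (b, y)) c d) <= (d - c) * M)
    by (apply CInt_norm_le; auto; intros; apply HM; simpl; lra).
  set (X1 := CInt (fun x => g (x, c)) a b) in *. set (X2 := CInt (fun x => g (x, d)) a b) in *.
  set (X3 := CInt (fun y => g (a, y)) c d) in *. set (X4 := CInt (fun y => g (b, y)) c d) in *.
  replace (X1 + Ci * X4 - X2 - Ci * X3)%C with (X1 + Ci * X4 + (- X2) + (- (Ci * X3)))%C by ring.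
  pose proof (Cmod_triangle (X1 + Ci * X4 + - X2) (- (Ci * X3))).
  pose proof (Cmod_triangle (X1 + Ci * X4) (- X2)). pose proof (Cmod_triangle X1 (Ci * X4)).
  rewrite !Cmod_opp, !Cmod_mult, Cmod_Ci in *. lra.
Qed.

Lemma hseg_int_primitive g G c a b : a <= b ->
  (forall x, a <= x <= b -> cderiv G (x, c) (g (x, c))) ->
  (forall x, a <= x <= b -> ccont g (x, c)) -> hseg_int g c a b = (G (b, c) - G (a, c))%C.
Proof.
  intros Hab H1 H2. unfold hseg_int.
  apply (CInt_derive (fun x => G (x, c))); intros x Hx; rewrite Rmin_left, Rmax_right in Hx by lra.
  - replace (g (x, c)) with (g (x, c) * 1)%C by ring.
    apply (pderiv_comp G (fun x => (x, c))); [auto|apply pderiv_hseg].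
  - apply (pcont_comp g (fun x => (x, c))); [eapply pcont_of_pderiv, pderiv_hseg|auto].
Qed.

Lemma vseg_int_primitive g G x c d : c <= d ->
  (forall y, c <= y <= d -> cderiv G (x, y) (g (x, y))) ->
  (forall y, c <= y <= d -> ccont g (x, y)) -> (Ci * vseg_int g x c d = G (x, d) - G (x, c))%C.
Proof.
  intros Hcd H1 H2. unfold vseg_int.
  rewrite <- CInt_scal by (apply ex_CInt_vseg; rewrite Rmin_left, Rmax_right by lra; auto).
  rewrite (CInt_ext _ (fun y => g (x, y) * Ci)%C) by (intros; apply Cmult_comm).
  apply (CInt_derive (fun y => G (x, y))); intros y Hy; rewrite Rmin_left, Rmax_right in Hy by lra.
  - apply (pderiv_comp G (fun y => (x, y))); [auto|apply pderiv_vseg].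
  - apply (pcont_comp (fun w => g w * Ci)%C (fun y => (x, y))); [eapply pcont_of_pderiv, pderiv_vseg|].
    apply ccont_mult; [auto|apply ccont_const].
Qed.

Lemma rect_int_primitive g G a b c d : a <= b -> c <= d ->
  (forall w, in_rect a b c d w -> cderiv G w (g w)) ->
  (forall w, in_rect a b c d w -> ccont g w) -> rect_int g a b c d = RtoC 0.
Proof.
  intros Hab Hcd H1 H2. unfold in_rect in *. unfold rect_int.
  rewrite (hseg_int_primitive g G c a b), (hseg_int_primitive g G d a b),
    (vseg_int_primitive g G b c d), (vseg_int_primitive g G a c d);
    auto; try (intros; simpl; apply H1 || apply H2; simpl; lra).
  ring.
Qed.

Lemma rect_int_affine (a b p : C) x1 x2 y1 y2 : x1 <= x2 -> y1 <= y2 ->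
  rect_int (fun w => a + b * (w - p))%C x1 x2 y1 y2 = RtoC 0.
Proof.
  intros Hx Hy.
  apply (rect_int_primitive _ (fun v => a * v + b / 2 * (v - p) * (v - p))%C); auto.
  - intros w _.
    assert (H := cderiv_plus _ _ w _ _ (cderiv_mult _ _ w _ _ (cderiv_const a w) (cderiv_id w))
      (cderiv_mult _ _ w _ _ (cderiv_affine 0 (b / 2) p w) (cderiv_affine 0 1 p w))).
    revert H. apply cderiv_ext_val; [intros; ring|].
    field.
  - intros w _. eapply ccont_of_cderiv. apply cderiv_affine.
Qed.

(** * Goursat's lemma *)

Record box := Box { bx0 : R; bx1 : R; by0 : R; by1 : R }.

Definition box_int (g : C -> C) (q : box) : C := rect_int g (bx0 q) (bx1 q) (by0 q) (by1 q).
Definition in_box (q : box) (w : C) : Prop := in_rect (bx0 q) (bx1 q) (by0 q) (by1 q) w.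
Definition box_wf (q : box) : Prop := bx0 q <= bx1 q /\ by0 q <= by1 q.
Definition box_size (q : box) : R := (bx1 q - bx0 q) + (by1 q - by0 q).

Section Quadrisection.

Variable g : C -> C.

Definition quarter_ll q := Box (bx0 q) ((bx0 q + bx1 q) / 2) (by0 q) ((by0 q + by1 q) / 2).
Definition quarter_lr q := Box ((bx0 q + bx1 q) / 2) (bx1 q) (by0 q) ((by0 q + by1 q) / 2).
Definition quarter_ul q := Box (bx0 q) ((bx0 q + bx1 q) / 2) ((by0 q + by1 q) / 2) (by1 q).
Definition quarter_ur q := Box ((bx0 q + bx1 q) / 2) (bx1 q) ((by0 q + by1 q) / 2) (by1 q).

Definition next_quarter q :=
  if Rle_dec (Cmod (box_int g q) / 4) (Cmod (box_int g (quarter_ll q))) then quarter_ll q else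
  if Rle_dec (Cmod (box_int g q) / 4) (Cmod (box_int g (quarter_lr q))) then quarter_lr q else
  if Rle_dec (Cmod (box_int g q) / 4) (Cmod (box_int g (quarter_ul q))) then quarter_ul q else
  quarter_ur q.

Fixpoint quarter_seq q n := match n with O => q | S n => next_quarter (quarter_seq q n) end.

Lemma box_int_quarters q : box_wf q -> (forall w, in_box q w -> ccont g w) ->
  box_int g q = (box_int g (quarter_ll q) + box_int g (quarter_lr q)
                 + box_int g (quarter_ul q) + box_int g (quarter_ur q))%C.
Proof.
  destruct q as [a b c d]. unfold box_wf, box_int, in_box, in_rect; simpl. intros [Hab Hcd] H.
  set (m := (a + b) / 2). set (n := (c + d) / 2).
  assert (Hm : a <= m <= b) by (unfold m; lra). assert (Hn : c <= n <= d) by (unfold n; lra).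
  assert (Hh : forall y x0 x1, c <= y <= d -> a <= x0 <= x1 -> x1 <= b ->
    ex_CInt (fun x => g (x, y)) x0 x1).
  { intros. apply ex_CInt_hseg. rewrite Rmin_left, Rmax_right by lra. intros; apply H; simpl; lra. }
  assert (Hv : forall x y0 y1, a <= x <= b -> c <= y0 <= y1 -> y1 <= d ->
    ex_CInt (fun y => g (x, y)) y0 y1).
  { intros. apply ex_CInt_vseg. rewrite Rmin_left, Rmax_right by lra. intros; apply H; simpl; lra. }
  rewrite (rect_int_splitX g a m b c d) by (apply Hh; lra).
  rewrite (rect_int_splitY g a m c n d), (rect_int_splitY g m b c n d) by (apply Hv; lra).
  ring.
Qed.

Lemma next_quarter_bound q : box_wf q -> (forall w, in_box q w -> ccont g w) ->
  Cmod (box_int g q) <= 4 * Cmod (box_int g (next_quarter q)).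
Proof.
  intros Hq Hc. pose proof (box_int_quarters q Hq Hc) as E.
  unfold next_quarter.
  destruct (Rle_dec _ _); [lra|]. destruct (Rle_dec _ _); [lra|]. destruct (Rle_dec _ _); [lra|].
  rewrite E in *.
  set (A1 := box_int g (quarter_ll q)) in *. set (A2 := box_int g (quarter_lr q)) in *.
  set (A3 := box_int g (quarter_ul q)) in *. set (A4 := box_int g (quarter_ur q)) in *.
  pose proof (Cmod_triangle (A1 + A2 + A3) A4). pose proof (Cmod_triangle (A1 + A2) A3).
  pose proof (Cmod_triangle A1 A2). lra.
Qed.

Lemma next_quarter_sub q : box_wf q ->
  bx0 q <= bx0 (next_quarter q) /\ bx1 (next_quarter q) <= bx1 q /\
  bx1 (next_quarter q) - bx0 (next_quarter q) = (bx1 q - bx0 q) / 2 /\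
  by0 q <= by0 (next_quarter q) /\ by1 (next_quarter q) <= by1 q /\
  by1 (next_quarter q) - by0 (next_quarter q) = (by1 q - by0 q) / 2.
Proof.
  intros [H1 H2]. unfold next_quarter, quarter_ll, quarter_lr, quarter_ul, quarter_ur.
  repeat destruct (Rle_dec _ _); simpl; lra.
Qed.

Lemma quarter_seq_sub q n : box_wf q ->
  bx0 q <= bx0 (quarter_seq q n) /\ bx1 (quarter_seq q n) <= bx1 q /\
  bx1 (quarter_seq q n) - bx0 (quarter_seq q n) = (bx1 q - bx0 q) / 2 ^ n /\
  by0 q <= by0 (quarter_seq q n) /\ by1 (quarter_seq q n) <= by1 q /\
  by1 (quarter_seq q n) - by0 (quarter_seq q n) = (by1 q - by0 q) / 2 ^ n.
Proof.
  intros [H1 H2]. induction n as [|n IH]; simpl.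
  - rewrite !Rdiv_1_r. lra.
  - assert (P : 0 < 2 ^ n) by (apply pow_lt; lra).
    destruct IH as [I1 [I2 [I3 [I4 [I5 I6]]]]].
    assert (0 <= (bx1 q - bx0 q) / 2 ^ n) by (apply Rdiv_le_0_compat; lra).
    assert (0 <= (by1 q - by0 q) / 2 ^ n) by (apply Rdiv_le_0_compat; lra).
    destruct (next_quarter_sub (quarter_seq q n)) as [J1 [J2 [J3 [J4 [J5 J6]]]]]; [split; lra|].
    repeat split; try lra.
    + rewrite J3, I3. field. lra.
    + rewrite J6, I6. field. lra.
Qed.

Lemma quarter_seq_wf q n : box_wf q -> box_wf (quarter_seq q n).
Proof.
  intros Hq. destruct (quarter_seq_sub q n Hq) as [_ [_ [E1 [_ [_ E2]]]]].
  destruct Hq as [H1 H2]. assert (P : 0 < 2 ^ n) by (apply pow_lt; lra).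
  assert (0 <= (bx1 q - bx0 q) / 2 ^ n) by (apply Rdiv_le_0_compat; lra).
  assert (0 <= (by1 q - by0 q) / 2 ^ n) by (apply Rdiv_le_0_compat; lra).
  split; lra.
Qed.

Lemma quarter_seq_mono q n m : box_wf q -> (n <= m)%nat ->
  bx0 (quarter_seq q n) <= bx0 (quarter_seq q m) /\ bx1 (quarter_seq q m) <= bx1 (quarter_seq q n) /\
  by0 (quarter_seq q n) <= by0 (quarter_seq q m) /\ by1 (quarter_seq q m) <= by1 (quarter_seq q n).
Proof.
  intros Hq Hnm. induction Hnm as [|m Hnm IH]; [lra|]. simpl.
  pose proof (next_quarter_sub _ (quarter_seq_wf q m Hq)). lra.
Qed.

Lemma quarter_seq_bound q n : box_wf q -> (forall w, in_box q w -> ccont g w) ->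
  Cmod (box_int g q) <= 4 ^ n * Cmod (box_int g (quarter_seq q n)).
Proof.
  intros Hq Hc. induction n as [|n IH]; simpl; [lra|].
  destruct (quarter_seq_sub q n Hq) as [I1 [I2 [_ [I4 [I5 _]]]]].
  assert (HB : Cmod (box_int g (quarter_seq q n)) <= 4 * Cmod (box_int g (next_quarter (quarter_seq q n)))).
  { apply next_quarter_bound; [apply quarter_seq_wf, Hq|].
    intros w [Hw1 Hw2]. apply Hc. unfold in_box, in_rect in *. lra. }
  assert (0 < 4 ^ n) by (apply pow_lt; lra).
  nra.
Qed.

End Quadrisection.

Lemma le_all_eps_eq0 x K : 0 <= x -> 0 <= K -> (forall eps, 0 < eps -> x <= eps * K) -> x = 0.
Proof.
  intros Hx HK H. destruct (Rle_lt_or_eq_dec 0 x Hx) as [Hp|]; auto.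
  assert (He : 0 < x / (2 * (K + 1))) by (apply Rdiv_lt_0_compat; lra).
  specialize (H _ He).
  assert (x / (2 * (K + 1)) * K < x).
  { apply Rle_lt_trans with (x / (2 * (K + 1)) * (K + 1)); [apply Rmult_le_compat_l; lra|].
    replace (x / (2 * (K + 1)) * (K + 1)) with (x / 2) by (field; lra). lra. }
  lra.
Qed.

Lemma nested_intervals (an bn : nat -> R) :
  (forall n m, (n <= m)%nat -> an n <= an m /\ bn m <= bn n) -> (forall n, an n <= bn n) ->
  exists p, forall n, an n <= p <= bn n.
Proof.
  intros Hm Hab.
  assert (Hle : forall n m, an n <= bn m).
  { intros n m. destruct (Nat.le_ge_cases n m) as [H|H].
    - destruct (Hm n m H). specialize (Hab m). lra.
    - destruct (Hm m n H). specialize (Hab n). lra. }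
  destruct (completeness (fun x => exists n, x = an n)) as [p [Hp1 Hp2]].
  - exists (bn O). intros x [n ->]. apply Hle.
  - exists (an O). exists O. reflexivity.
  - exists p. intros n. split; [apply Hp1; exists n; reflexivity|].
    apply Hp2. intros x [k ->]. apply Hle.
Qed.

Lemma INR_le_pow_2 n : INR n <= 2 ^ n.
Proof.
  induction n as [|n IH]; [simpl; lra|]. rewrite S_INR. simpl.
  assert (1 <= 2 ^ n) by (apply pow_R1_Rle; lra). lra.
Qed.

Lemma quarter_seq_common_point g q : box_wf q ->
  exists p, forall n, in_box (quarter_seq g q n) p.
Proof.
  intros Hq.
  destruct (nested_intervals (fun n => bx0 (quarter_seq g q n)) (fun n => bx1 (quarter_seq g q n)))
    as [px Hpx].
  { intros n m Hnm. destruct (quarter_seq_mono g q n m Hq Hnm); tauto. }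
  { intros n. apply (quarter_seq_wf g q n Hq). }
  destruct (nested_intervals (fun n => by0 (quarter_seq g q n)) (fun n => by1 (quarter_seq g q n)))
    as [py Hpy].
  { intros n m Hnm. destruct (quarter_seq_mono g q n m Hq Hnm); tauto. }
  { intros n. apply (quarter_seq_wf g q n Hq). }
  exists (px, py). intros n. split; simpl; auto.
Qed.

Lemma in_box_dist q p w : in_box q p -> in_box q w -> Cmod (w - p) <= box_size q.
Proof.
  intros [Hp1 Hp2] [Hw1 Hw2]. eapply Rle_trans; [apply Cmod_le_re_im|]. unfold box_size. simpl.
  assert (Rabs (fst w + - fst p) <= bx1 q - bx0 q) by (apply Rabs_le; lra).
  assert (Rabs (snd w + - snd p) <= by1 q - by0 q) by (apply Rabs_le; lra).
  lra.
Qed.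

(** Subtracting the tangent map at [p], which integrates to zero, leaves only the
    [o(|w - p|)] remainder. *)
Lemma box_int_near_deriv g q p l eps : 0 <= eps -> box_wf q -> in_box q p ->
  (forall w, in_box q w -> ccont g w) ->
  (forall w, in_box q w -> Cmod (g w - g p - (w - p) * l) <= eps * Cmod (w - p)) ->
  Cmod (box_int g q) <= 2 * box_size q * (eps * box_size q).
Proof.
  intros Heps [Hq1 Hq2] Hp Hc Hl.
  set (tangent := fun w => (g p + l * (w - p))%C).
  assert (Ht : forall w, ccont tangent w) by (intros; eapply ccont_of_cderiv, cderiv_affine).
  assert (E : box_int g q = box_int (fun w => g w - tangent w)%C q).
  { unfold box_int. rewrite rect_int_minus by (apply rect_integrable_of_ccont; auto).
    unfold tangent. rewrite rect_int_affine by auto. ring. }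
  rewrite E. unfold box_int, box_size.
  apply rect_int_norm_le; auto.
  - apply rect_integrable_of_ccont; auto. intros w Hw. apply ccont_minus; auto.
  - intros w Hw. unfold tangent.
    replace (g w - (g p + l * (w - p)))%C with (g w - g p - (w - p) * l)%C by ring.
    eapply Rle_trans; [apply Hl, Hw|].
    apply Rmult_le_compat_l; auto. apply (in_box_dist q p w Hp Hw).
Qed.

Lemma goursat g a b c d : a <= b -> c <= d ->
  (forall w, in_rect a b c d w -> exists l, cderiv g w l) -> rect_int g a b c d = RtoC 0.
Proof.
  intros Hab Hcd Hd.
  set (q := Box a b c d). change (rect_int g a b c d) with (box_int g q).
  assert (Hq : box_wf q) by (split; simpl; lra).
  assert (Hc : forall w, in_box q w -> ccont g w)
    by (intros w Hw; destruct (Hd w Hw) as [l Hl]; eapply ccont_of_cderiv, Hl).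
  destruct (quarter_seq_common_point g q Hq) as [p Hp].
  destruct (Hd p (Hp O)) as [l Hl].
  apply Cmod_eq_0, (le_all_eps_eq0 _ (2 * box_size q ^ 2)); [apply Cmod_ge_0|unfold box_size; simpl; nra|].
  intros eps Heps.
  destruct (Hl eps Heps) as [dl [Hdl Hl']].
  destruct (INR_archimed dl (box_size q)) as [n Hn]; [auto|].
  assert (P2 : 0 < 2 ^ n) by (apply pow_lt; lra).
  pose proof (quarter_seq_sub g q n Hq) as [I1 [I2 [I3 [I4 [I5 I6]]]]].
  pose proof (quarter_seq_wf g q n Hq) as Hqn.
  set (qn := quarter_seq g q n) in *.
  assert (Hsize : box_size qn = box_size q / 2 ^ n) by (unfold box_size; rewrite I3, I6; field; lra).
  assert (Hsmall : box_size qn < dl).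
  { rewrite Hsize. apply Rmult_lt_reg_r with (2 ^ n); auto. unfold Rdiv.
    rewrite Rmult_assoc, Rinv_l by lra. pose proof (INR_le_pow_2 n). nra. }
  assert (Hcn : forall w, in_box qn w -> ccont g w).
  { intros w [Hw1 Hw2]. apply Hc. split; lra. }
  assert (Hbound : Cmod (box_int g qn) <= 2 * box_size qn * (eps * box_size qn)).
  { apply (box_int_near_deriv g qn p l); [lra|exact Hqn|apply Hp|exact Hcn|].
    intros w Hw. apply Hl'. eapply Rle_lt_trans; [apply (in_box_dist qn p w (Hp n) Hw)|exact Hsmall]. }
  eapply Rle_trans; [apply (quarter_seq_bound g q n Hq Hc)|]. fold qn.
  assert (E4 : 4 ^ n = 2 ^ n * 2 ^ n) by (rewrite <- Rpow_mult_distr; f_equal; lra).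
  apply Rle_trans with (4 ^ n * (2 * box_size qn * (eps * box_size qn))).
  - apply Rmult_le_compat_l; [apply pow_le; lra|exact Hbound].
  - right. rewrite E4, Hsize. field. lra.
Qed.

Lemma rect_int_excise g a b c d x1 x2 y1 y2 :
  a <= x1 <= x2 -> x2 <= b -> c <= y1 <= y2 -> y2 <= d ->
  (forall w, in_rect a b c d w -> ccont g w) ->
  rect_int g a b c d = (rect_int g a x1 c d + rect_int g x2 b c d + rect_int g x1 x2 c y1
                        + rect_int g x1 x2 y2 d + rect_int g x1 x2 y1 y2)%C.
Proof.
  intros Hx1 Hx2 Hy1 Hy2 Hc. unfold in_rect in Hc.
  assert (Hh : forall y u v, c <= y <= d -> a <= u <= v -> v <= b -> ex_CInt (fun x => g (x, y)) u v).
  { intros. apply ex_CInt_hseg. rewrite Rmin_left, Rmax_right by lra. intros; apply Hc; simpl; lra. }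
  assert (Hv : forall x u v, a <= x <= b -> c <= u <= v -> v <= d -> ex_CInt (fun y => g (x, y)) u v).
  { intros. apply ex_CInt_vseg. rewrite Rmin_left, Rmax_right by lra. intros; apply Hc; simpl; lra. }
  rewrite (rect_int_splitX g a x1 b c d), (rect_int_splitX g x1 x2 b c d) by (apply Hh; lra).
  rewrite (rect_int_splitY g x1 x2 c y1 d), (rect_int_splitY g x1 x2 y1 y2 d) by (apply Hv; lra).
  ring.
Qed.

Lemma goursat_off_point g z a b c d : a <= b -> c <= d ->
  (forall w, in_rect a b c d w -> w <> z -> exists l, cderiv g w l) ->
  a = b \/ c = d \/ ~ in_rect a b c d z -> rect_int g a b c d = RtoC 0.
Proof.
  intros Hab Hcd Hd [<-|[<-|Hz]]; [apply rect_int_degX|apply rect_int_degY|].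
  apply goursat; auto. intros w Hw. apply Hd; auto. intros ->. auto.
Qed.

Lemma Rmax_lt_or_eq a x s : 0 < s -> Rmax a (x - s) = a \/ Rmax a (x - s) < x.
Proof. intros Hs. unfold Rmax. destruct (Rle_dec a (x - s)); [right; lra|left; auto]. Qed.

Lemma Rmin_gt_or_eq b x s : 0 < s -> Rmin b (x + s) = b \/ x < Rmin b (x + s).
Proof. intros Hs. unfold Rmin. destruct (Rle_dec b (x + s)); [left; auto|right; lra]. Qed.

Lemma rect_int_localize g zx zy s a b c d : 0 < s -> a <= zx <= b -> c <= zy <= d ->
  (forall w, in_rect a b c d w -> ccont g w) ->
  (forall w, in_rect a b c d w -> w <> (zx, zy) -> exists l, cderiv g w l) ->
  rect_int g a b c d = rect_int g (Rmax a (zx - s)) (Rmin b (zx + s)) (Rmax c (zy - s)) (Rmin d (zy + s)).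
Proof.
  intros Hs Hzx Hzy Hc Hd.
  set (x1 := Rmax a (zx - s)). set (x2 := Rmin b (zx + s)).
  set (y1 := Rmax c (zy - s)). set (y2 := Rmin d (zy + s)).
  assert (Hx1 : a <= x1 <= zx) by (unfold x1; split; [apply Rmax_l|apply Rmax_lub; lra]).
  assert (Hx2 : zx <= x2 <= b) by (unfold x2; split; [apply Rmin_glb; lra|apply Rmin_l]).
  assert (Hy1 : c <= y1 <= zy) by (unfold y1; split; [apply Rmax_l|apply Rmax_lub; lra]).
  assert (Hy2 : zy <= y2 <= d) by (unfold y2; split; [apply Rmin_glb; lra|apply Rmin_l]).
  assert (Hoff : forall a' b' c' d', a <= a' -> a' <= b' -> b' <= b -> c <= c' -> c' <= d' -> d' <= d ->
    a' = b' \/ c' = d' \/ ~ in_rect a' b' c' d' (zx, zy) -> rect_int g a' b' c' d' = RtoC 0).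
  { intros a' b' c' d' ? ? ? ? ? ?. apply (goursat_off_point g (zx, zy)); auto.
    intros w [Hw1 Hw2]. apply Hd. split; lra. }
  rewrite (rect_int_excise g a b c d x1 x2 y1 y2) by (auto; lra).
  rewrite (Hoff a x1 c d), (Hoff x2 b c d), (Hoff x1 x2 c y1), (Hoff x1 x2 y2 d); try lra; [ring| | | |];
    unfold x1, x2, y1, y2 in *;
    [ destruct (Rmin_gt_or_eq d zy s Hs) | destruct (Rmax_lt_or_eq c zy s Hs)
    | destruct (Rmin_gt_or_eq b zx s Hs) | destruct (Rmax_lt_or_eq a zx s Hs) ];
    unfold in_rect; simpl; intuition lra.
Qed.

(** Goursat's lemma survives one point where [g] is merely continuous: the rest of the
    rectangle integrates to zero and a square of side [2 s] around the point contributes [O(s)]. *)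
Lemma goursat_punctured g z a b c d : a <= b -> c <= d ->
  (forall w, in_rect a b c d w -> ccont g w) ->
  (forall w, in_rect a b c d w -> w <> z -> exists l, cderiv g w l) ->
  rect_int g a b c d = RtoC 0.
Proof.
  intros Hab Hcd Hc Hd.
  destruct (classic (in_rect a b c d z)) as [Hz|Hz];
    [|apply (goursat_off_point g z); auto].
  destruct z as [zx zy]. destruct Hz as [Hzx Hzy]; simpl in Hzx, Hzy.
  destruct (Hc (zx, zy) ltac:(split; simpl; lra) 1 Rlt_0_1) as [d0 [Hd0 H0]].
  set (M := Cmod (g (zx, zy)) + 1).
  assert (HM0 : 0 <= M) by (unfold M; pose proof (Cmod_ge_0 (g (zx, zy))); lra).
  assert (HM : forall w, Cmod (w - (zx, zy)) < d0 -> Cmod (g w) <= M).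
  { intros w Hw. specialize (H0 w Hw). unfold M.
    replace (g w) with ((g w - g (zx, zy)) + g (zx, zy))%C by ring.
    eapply Rle_trans; [apply Cmod_triangle|]. lra. }
  apply Cmod_eq_0, (le_all_eps_eq0 _ (8 * M)); [apply Cmod_ge_0|lra|].
  intros eps Heps.
  set (s := Rmin eps (d0 / 4)).
  assert (Hs : 0 < s) by (apply Rmin_pos; lra).
  assert (Hs1 : s <= eps) by apply Rmin_l. assert (Hs2 : s <= d0 / 4) by apply Rmin_r.
  rewrite (rect_int_localize g zx zy s a b c d Hs Hzx Hzy Hc Hd).
  pose proof (Rmax_l a (zx - s)). pose proof (Rmax_r a (zx - s)). pose proof (Rmax_lub a (zx - s) zx).
  pose proof (Rmin_l b (zx + s)). pose proof (Rmin_r b (zx + s)). pose proof (Rmin_glb b (zx + s) zx).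
  pose proof (Rmax_l c (zy - s)). pose proof (Rmax_r c (zy - s)). pose proof (Rmax_lub c (zy - s) zy).
  pose proof (Rmin_l d (zy + s)). pose proof (Rmin_r d (zy + s)). pose proof (Rmin_glb d (zy + s) zy).
  eapply Rle_trans.
  - apply rect_int_norm_le with (M := M); try lra.
    + apply rect_integrable_of_ccont; try lra. intros w [Hw1 Hw2]. apply Hc. split; lra.
    + intros w [Hw1 Hw2]. apply HM.
      eapply Rle_lt_trans; [apply Cmod_le_re_im|]. simpl.
      assert (Rabs (fst w + - zx) <= s) by (apply Rabs_le; lra).
      assert (Rabs (snd w + - zy) <= s) by (apply Rabs_le; lra).
      lra.
  - assert (0 <= M * (eps - s)) by (apply Rmult_le_pos; lra). nra.
Qed.

(** * A primitive on a disk *)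

Lemma Cmod_le_of_parts u v x y e1 e2 : 0 <= e1 -> 0 <= e2 ->
  Rabs u <= Rabs x + e1 -> Rabs v <= Rabs y + e2 -> Cmod (u, v) <= Cmod (x, y) + e1 + e2.
Proof.
  intros He1 He2 H1 H2.
  assert (Hx := re_le_Cmod (x, y)). assert (Hy := Rmax_Cmod (x, y)). simpl in Hx, Hy.
  assert (Hy' : Rabs y <= Cmod (x, y)) by (eapply Rle_trans; [apply Rmax_r|exact Hy]).
  set (m := Cmod (x, y)) in *.
  assert (Hm : 0 <= m) by (unfold m; apply Cmod_ge_0).
  assert (Hm2 : m * m = x * x + y * y) by (unfold m, Cmod; simpl; rewrite sqrt_sqrt; [ring|nra]).
  unfold Cmod. simpl. rewrite <- (sqrt_square (m + e1 + e2)) by lra.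
  apply sqrt_le_1_alt.
  assert (Sq : forall r, r * (r * 1) = Rabs r * Rabs r)
    by (intros; rewrite <- Rabs_mult, Rabs_pos_eq by nra; ring).
  rewrite !Sq.
  assert (Hx2 : x * x = Rabs x * Rabs x) by (rewrite <- Rabs_mult, Rabs_pos_eq by nra; ring).
  assert (Hy2 : y * y = Rabs y * Rabs y) by (rewrite <- Rabs_mult, Rabs_pos_eq by nra; ring).
  pose proof (Rabs_pos u). pose proof (Rabs_pos v). pose proof (Rabs_pos x). pose proof (Rabs_pos y).
  assert (Rabs u * Rabs u <= (Rabs x + e1) * (Rabs x + e1)) by nra.
  assert (Rabs v * Rabs v <= (Rabs y + e2) * (Rabs y + e2)) by nra.
  nra.
Qed.

Lemma Rabs_between u a b : Rmin a b <= u <= Rmax a b -> Rabs u <= Rmax (Rabs a) (Rabs b).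
Proof.
  intros Hu. unfold Rmin, Rmax in *. destruct (Rle_dec a b);
  apply Rabs_le; destruct (Rle_dec (Rabs a) (Rabs b)); unfold Rabs in *;
  repeat destruct Rcase_abs; lra.
Qed.

Lemma Rabs_between_0 u b : Rmin 0 b <= u <= Rmax 0 b -> Rabs u <= Rabs b.
Proof.
  intros Hu. apply Rabs_between in Hu. rewrite Rabs_R0, Rmax_right in Hu by apply Rabs_pos. exact Hu.
Qed.

Lemma Rabs_between_incr u a b : Rmin a b <= u <= Rmax a b -> Rabs u <= Rabs a + Rabs (b - a).
Proof.
  intros Hu. apply Rabs_between in Hu.
  assert (Rabs b <= Rabs a + Rabs (b - a)) by (replace b with (a + (b - a)) at 1 by ring; apply Rabs_triang).
  pose proof (Rabs_pos (b - a)). unfold Rmax in Hu. destruct (Rle_dec (Rabs a) (Rabs b)); lra.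
Qed.

Lemma Rabs_between_dist u a b : Rmin a b <= u <= Rmax a b -> Rabs (u - a) <= Rabs (b - a).
Proof.
  intros Hu. unfold Rmin, Rmax in Hu.
  destruct (Rle_dec a b); apply Rabs_le; unfold Rabs; repeat destruct Rcase_abs; lra.
Qed.

Lemma CInt_sub_const_le f a b k e :
  (forall u, Rmin a b <= u <= Rmax a b -> pcont f u) ->
  (forall u, Rmin a b <= u <= Rmax a b -> Cmod (f u - k) <= e) ->
  Cmod (CInt f a b - RtoC (b - a) * k) <= Rabs (b - a) * e.
Proof.
  intros Hc He.
  assert (If : ex_CInt f a b) by (apply ex_CInt_continuous, Hc).
  assert (Ik : ex_CInt (fun _ => k) a b) by apply (@ex_RInt_const C_R_NormedModule).
  rewrite <- CInt_const, <- CInt_minus by auto.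
  apply CInt_norm_le_abs; [exact He|].
  apply (@ex_RInt_minus C_R_NormedModule); auto.
Qed.

Lemma hseg_int_sub_const_le g y a b k e :
  (forall u, Rmin a b <= u <= Rmax a b -> ccont g (u, y)) ->
  (forall u, Rmin a b <= u <= Rmax a b -> Cmod (g (u, y) - k) <= e) ->
  Cmod (hseg_int g y a b - RtoC (b - a) * k) <= Rabs (b - a) * e.
Proof.
  intros Hc He. apply CInt_sub_const_le; auto. intros u Hu.
  apply (pcont_comp g (fun u => (u, y))); [eapply pcont_of_pderiv, pderiv_hseg|auto].
Qed.

Lemma vseg_int_sub_const_le g x a b k e :
  (forall v, Rmin a b <= v <= Rmax a b -> ccont g (x, v)) ->
  (forall v, Rmin a b <= v <= Rmax a b -> Cmod (g (x, v) - k) <= e) ->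
  Cmod (vseg_int g x a b - RtoC (b - a) * k) <= Rabs (b - a) * e.
Proof.
  intros Hc He. apply CInt_sub_const_le; auto. intros v Hv.
  apply (pcont_comp g (fun v => (x, v))); [eapply pcont_of_pderiv, pderiv_vseg|auto].
Qed.

Definition disk_primitive (g : C -> C) (w : C) : C :=
  (hseg_int g 0 0 (fst w) + Ci * vseg_int g (fst w) 0 (snd w))%C.

Lemma disk_primitive_increment g x y x' y' :
  ex_CInt (fun u => g (u, 0)) 0 x -> ex_CInt (fun u => g (u, 0)) x x' ->
  ex_CInt (fun v => g (x', v)) 0 y -> ex_CInt (fun v => g (x', v)) y y' ->
  rect_int g x x' 0 y = RtoC 0 ->
  (disk_primitive g (x', y') - disk_primitive g (x, y) =
   hseg_int g y x x' + Ci * vseg_int g x' y y')%C.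
Proof.
  intros I1 I2 I3 I4 Hrect. unfold disk_primitive, rect_int, hseg_int, vseg_int in *; simpl.
  rewrite <- (CInt_Chasles _ 0 x x' I1 I2), <- (CInt_Chasles _ 0 y y' I3 I4).
  replace (CInt (fun x0 => g (x0, 0)) 0 x + CInt (fun x0 => g (x0, 0)) x x' +
     Ci * (CInt (fun y0 => g (x', y0)) 0 y + CInt (fun y0 => g (x', y0)) y y') -
     (CInt (fun x0 => g (x0, 0)) 0 x + Ci * CInt (fun y0 => g (x, y0)) 0 y))%C with
    ((CInt (fun x0 => g (x0, 0)) x x' + Ci * CInt (fun y0 => g (x', y0)) 0 y
      - CInt (fun x0 => g (x0, y)) x x' - Ci * CInt (fun y0 => g (x, y0)) 0 y)
     + (CInt (fun x0 => g (x0, y)) x x' + Ci * CInt (fun y0 => g (x', y0)) y y'))%C by ring.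
  rewrite Hrect. ring.
Qed.

Section DiskPrimitive.

Variables (g : C -> C) (rho : R).
Hypothesis g_cont : forall w, Cmod w < rho -> ccont g w.
Hypothesis g_rect : forall a b c d, a <= b -> c <= d ->
  (forall w, in_rect a b c d w -> Cmod w < rho) -> rect_int g a b c d = RtoC 0.

Lemma rect_int_disk_unordered a b c d :
  (forall w, in_rect (Rmin a b) (Rmax a b) (Rmin c d) (Rmax c d) w -> Cmod w < rho) ->
  rect_int g a b c d = RtoC 0.
Proof.
  intros HP.
  assert (Hx : forall y, Rmin c d <= y <= Rmax c d -> ex_CInt (fun x => g (x, y)) b a).
  { intros y Hy. apply ex_CInt_hseg. intros x Hx0. apply g_cont, HP.
    rewrite Rmin_comm, Rmax_comm in Hx0. split; simpl; lra. }
  assert (Hy : forall x, Rmin a b <= x <= Rmax a b -> ex_CInt (fun y => g (x, y)) d c).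
  { intros x Hx0. apply ex_CInt_vseg. intros y Hy0. apply g_cont, HP.
    rewrite Rmin_comm, Rmax_comm in Hy0. split; simpl; lra. }
  pose proof (Rmin_l a b). pose proof (Rmin_r a b). pose proof (Rmax_l a b). pose proof (Rmax_r a b).
  pose proof (Rmin_l c d). pose proof (Rmin_r c d). pose proof (Rmax_l c d). pose proof (Rmax_r c d).
  destruct (Rle_dec a b) as [Hab|Hab]; destruct (Rle_dec c d) as [Hcd|Hcd].
  - apply g_rect; auto. rewrite Rmin_left, Rmax_right, Rmin_left, Rmax_right in HP by lra. exact HP.
  - rewrite (rect_int_swapY g a b d c) by (apply Hy; lra).
    rewrite g_rect; [ring|lra|lra|].
    rewrite Rmin_left, Rmax_right, Rmin_right, Rmax_left in HP by lra. exact HP.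
  - rewrite (rect_int_swapX g b a c d) by (apply Hx; lra).
    rewrite g_rect; [ring|lra|lra|].
    rewrite Rmin_right, Rmax_left, Rmin_left, Rmax_right in HP by lra. exact HP.
  - rewrite (rect_int_swapX g b a c d) by (apply Hx; lra).
    rewrite (rect_int_swapY g b a d c) by (apply Hy; lra).
    rewrite g_rect; [ring|lra|lra|].
    rewrite Rmin_right, Rmax_left, Rmin_right, Rmax_left in HP by lra. exact HP.
Qed.

Lemma disk_primitive_increment_in_disk x y x' y' :
  (forall u v, Rabs u <= Rabs x + Rabs (x' - x) -> Rabs v <= Rabs y + Rabs (y' - y) -> Cmod (u, v) < rho) ->
  (disk_primitive g (x', y') - disk_primitive g (x, y) = hseg_int g y x x' + Ci * vseg_int g x' y y')%C.
Proof.
  intros Hdisk.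
  assert (Hc : forall u v, Rabs u <= Rabs x + Rabs (x' - x) -> Rabs v <= Rabs y + Rabs (y' - y) ->
    ccont g (u, v)) by (intros; apply g_cont, Hdisk; auto).
  pose proof (Rabs_pos (x' - x)). pose proof (Rabs_pos (y' - y)).
  pose proof (Rabs_pos x). pose proof (Rabs_pos y).
  apply disk_primitive_increment.
  - apply ex_CInt_hseg. intros u Hu. apply Rabs_between_0 in Hu. apply Hc; [lra|rewrite Rabs_R0; lra].
  - apply ex_CInt_hseg. intros u Hu. apply Rabs_between_incr in Hu. apply Hc; [exact Hu|rewrite Rabs_R0; lra].
  - apply ex_CInt_vseg. intros v Hv. apply Rabs_between_0 in Hv. apply Hc; [|lra].
    replace x' with (x + (x' - x)) at 1 by ring. apply Rabs_triang.
  - apply ex_CInt_vseg. intros v Hv. apply Rabs_between_incr in Hv. apply Hc; [|exact Hv].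
    replace x' with (x + (x' - x)) at 1 by ring. apply Rabs_triang.
  - apply rect_int_disk_unordered. intros [u v] [Hu Hv]; simpl in Hu, Hv.
    apply Rabs_between_incr in Hu. apply Rabs_between_0 in Hv. apply Hdisk; lra.
Qed.

Lemma disk_primitive_cderiv w : Cmod w < rho -> cderiv (disk_primitive g) w (g w).
Proof.
  intros Hw eps Heps. destruct w as [x y].
  set (eta := rho - Cmod (x, y)).
  destruct (g_cont (x, y) Hw (eps / 2)) as [dl [Hdl Hg]]; [lra|].
  exists (Rmin (eta / 2) (dl / 2)). split; [apply Rmin_pos; unfold eta; lra|].
  intros [x' y'] Hh.
  assert (Hh1 : Cmod ((x', y') - (x, y)) < eta / 2) by (eapply Rlt_le_trans; [exact Hh|apply Rmin_l]).
  assert (Hh2 : Cmod ((x', y') - (x, y)) < dl / 2) by (eapply Rlt_le_trans; [exact Hh|apply Rmin_r]).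
  set (h := ((x', y') - (x, y))%C) in *.
  set (s := x' - x). set (t := y' - y).
  assert (Hst := Rmax_Cmod h). unfold h in Hst; simpl in Hst. fold h in Hst.
  assert (Hs : Rabs s <= Cmod h) by (eapply Rle_trans; [|exact Hst]; apply Rmax_l).
  assert (Ht : Rabs t <= Cmod h) by (eapply Rle_trans; [|exact Hst]; apply Rmax_r).
  assert (Hdisk : forall u v, Rabs u <= Rabs x + Rabs s -> Rabs v <= Rabs y + Rabs t -> Cmod (u, v) < rho).
  { intros u v Hu Hv. eapply Rle_lt_trans; [apply Cmod_le_of_parts; eauto; apply Rabs_pos|].
    unfold eta in Hh1. lra. }
  assert (Hx' : Rabs x' <= Rabs x + Rabs s)
    by (replace x' with (x + s) by (unfold s; ring); apply Rabs_triang).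
  rewrite disk_primitive_increment_in_disk by exact Hdisk.
  replace (hseg_int g y x x' + Ci * vseg_int g x' y y' - h * g (x, y))%C
    with ((hseg_int g y x x' - RtoC s * g (x, y)) + Ci * (vseg_int g x' y y' - RtoC t * g (x, y)))%C
    by (unfold h, s, t, Cminus, Cplus, Copp, Cmult, RtoC, Ci; simpl; f_equal; ring).
  assert (B1 : Cmod (hseg_int g y x x' - RtoC s * g (x, y)) <= Rabs s * (eps / 2)).
  { apply hseg_int_sub_const_le.
    - intros u Hu. apply Rabs_between_incr in Hu.
      apply g_cont, Hdisk; [exact Hu|]. pose proof (Rabs_pos t). lra.
    - intros u Hu. left. apply Hg.
      replace ((u, y) - (x, y))%C with (RtoC (u - x))
        by (unfold Cminus, Cplus, Copp, RtoC; simpl; f_equal; ring).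
      rewrite Cmod_R. apply Rabs_between_dist in Hu. fold s in Hu. lra. }
  assert (B2 : Cmod (vseg_int g x' y y' - RtoC t * g (x, y)) <= Rabs t * (eps / 2)).
  { apply vseg_int_sub_const_le.
    - intros v Hv. apply Rabs_between_incr in Hv. apply g_cont, Hdisk; [exact Hx'|exact Hv].
    - intros v Hv. left. apply Hg.
      eapply Rle_lt_trans; [apply Cmod_le_re_im|]. simpl.
      apply Rabs_between_dist in Hv. fold t in Hv.
      replace (x' + - x) with s by (unfold s; ring). unfold Rminus in Hv. lra. }
  eapply Rle_trans; [apply Cmod_triangle|]. rewrite Cmod_mult, Cmod_Ci.
  assert (Rabs s * (eps / 2) + Rabs t * (eps / 2) <= eps * Cmod h) by nra. lra.
Qed.

End DiskPrimitive.

(** * Circle integrals and Cauchy's integral formula *)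

Lemma pderiv_pair f1 f2 t d1 d2 : derivable_pt_lim f1 t d1 -> derivable_pt_lim f2 t d2 ->
  pderiv (fun s => (f1 s, f2 s)) t (d1, d2).
Proof.
  assert (Lin : forall f d, derivable_pt_lim f t d -> forall eps, 0 < eps -> exists delta, 0 < delta /\
    forall s, Rabs (s - t) < delta -> Rabs (f s - f t - (s - t) * d) <= eps * Rabs (s - t)).
  { intros f d H eps Heps. destruct (H eps Heps) as [dl Hdl]. exists dl. split; [apply cond_pos|].
    intros s Hs. destruct (Req_dec s t) as [->|E].
    - replace (t - t) with 0 by ring. rewrite Rabs_R0. replace (f t - f t - 0 * d) with 0 by ring.
      rewrite Rabs_R0. lra.
    - specialize (Hdl (s - t)). replace (t + (s - t)) with s in Hdl by ring.
      specialize (Hdl ltac:(lra) Hs).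
      replace (f s - f t - (s - t) * d) with ((s - t) * ((f s - f t) / (s - t) - d)) by (field; lra).
      rewrite Rabs_mult, Rmult_comm. apply Rmult_le_compat_r; [apply Rabs_pos|lra]. }
  intros H1 H2 eps Heps.
  destruct (Lin f1 d1 H1 (eps / 2)) as [e1 [He1 K1]]; [lra|].
  destruct (Lin f2 d2 H2 (eps / 2)) as [e2 [He2 K2]]; [lra|].
  exists (Rmin e1 e2). split; [apply Rmin_pos; auto|]. intros s Hs.
  specialize (K1 s (Rlt_le_trans _ _ _ Hs (Rmin_l _ _))).
  specialize (K2 s (Rlt_le_trans _ _ _ Hs (Rmin_r _ _))).
  eapply Rle_trans; [apply Cmod_le_re_im|]. simpl.
  replace (f1 s + - f1 t + - ((s - t) * d1 - 0 * d2)) with (f1 s - f1 t - (s - t) * d1) by ring.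
  replace (f2 s + - f2 t + - ((s - t) * d2 + 0 * d1)) with (f2 s - f2 t - (s - t) * d2) by ring.
  lra.
Qed.

Lemma pderiv_scal k g t l : pderiv g t l -> pderiv (fun s => k * g s)%C t (k * l)%C.
Proof.
  intros H eps Heps.
  destruct (H (eps / (Cmod k + 1))) as [d [Hd H']]; [apply Rdiv_lt_0_compat; pose proof (Cmod_ge_0 k); lra|].
  exists d. split; auto. intros s Hs.
  replace (k * g s - k * g t - RtoC (s - t) * (k * l))%C with (k * (g s - g t - RtoC (s - t) * l))%C by ring.
  rewrite Cmod_mult. specialize (H' s Hs).
  pose proof (Cmod_ge_0 k). pose proof (Rabs_pos (s - t)).
  apply Rle_trans with (Cmod k * (eps / (Cmod k + 1) * Rabs (s - t))); [apply Rmult_le_compat_l; lra|].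
  apply Rle_trans with ((Cmod k / (Cmod k + 1)) * eps * Rabs (s - t)); [right; field; lra|].
  apply Rmult_le_compat_r; auto.
  assert (Cmod k / (Cmod k + 1) <= 1).
  { apply Rmult_le_reg_r with (Cmod k + 1); [lra|]. field_simplify; lra. }
  nra.
Qed.

Definition expi (t : R) : C := (cos t, sin t).
Definition circle (rho t : R) : C := (RtoC rho * expi t)%C.

Lemma Cmod_expi t : Cmod (expi t) = 1.
Proof.
  unfold Cmod, expi. simpl. pose proof (sin2_cos2 t). unfold Rsqr in H.
  replace (cos t * (cos t * 1) + sin t * (sin t * 1)) with 1 by lra. apply sqrt_1.
Qed.

Lemma Cmod_circle rho t : 0 <= rho -> Cmod (circle rho t) = rho.
Proof. intros. unfold circle. rewrite Cmod_mult, Cmod_expi, Cmod_R, Rabs_pos_eq; lra. Qed.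

Lemma pderiv_circle rho t : pderiv (circle rho) t (Ci * circle rho t)%C.
Proof.
  unfold circle. replace (Ci * (RtoC rho * expi t))%C with (RtoC rho * (Ci * expi t))%C by ring.
  apply pderiv_scal.
  replace (Ci * expi t)%C with (- sin t, cos t) by (unfold Ci, expi, Cmult; simpl; f_equal; ring).
  apply pderiv_pair; [apply derivable_pt_lim_cos|apply derivable_pt_lim_sin].
Qed.

Lemma pcont_circle rho t : pcont (circle rho) t.
Proof. eapply pcont_of_pderiv, pderiv_circle. Qed.

Lemma circle_2PI rho : circle rho (2 * PI) = circle rho 0.
Proof. unfold circle, expi. rewrite cos_2PI, sin_2PI, cos_0, sin_0. reflexivity. Qed.

Lemma circle_sub_neq0 rho t a : Cmod a < rho -> (circle rho t - a)%C <> RtoC 0.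
Proof.
  intros H. apply Cmod_gt_0. pose proof (Cmod_rev_triangle (circle rho t) a).
  rewrite Cmod_circle in H0 by (pose proof (Cmod_ge_0 a); lra). lra.
Qed.

Definition circle_int (rho : R) (g : C -> C) : C :=
  CInt (fun t => g (circle rho t) * (Ci * circle rho t))%C 0 (2 * PI).

Lemma ex_circle_int rho g : (forall t, ccont g (circle rho t)) ->
  ex_CInt (fun t => g (circle rho t) * (Ci * circle rho t))%C 0 (2 * PI).
Proof.
  intros Hg. apply ex_CInt_continuous. intros t _.
  apply (pcont_comp (fun w => g w * (Ci * w))%C (circle rho)); [apply pcont_circle|].
  apply ccont_mult; [apply Hg|apply ccont_mult; [apply ccont_const|apply ccont_id]].
Qed.

Lemma cauchy_circle g rho rho1 : 0 < rho < rho1 -> (forall w, Cmod w < rho1 -> ccont g w) ->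
  (forall a b c d, a <= b -> c <= d -> (forall w, in_rect a b c d w -> Cmod w < rho1) ->
     rect_int g a b c d = RtoC 0) ->
  circle_int rho g = RtoC 0.
Proof.
  intros Hr Hc HR. unfold circle_int.
  rewrite (CInt_derive (fun t => disk_primitive g (circle rho t))).
  - rewrite circle_2PI. ring.
  - intros t _. apply (pderiv_comp (disk_primitive g) (circle rho)); [|apply pderiv_circle].
    apply (disk_primitive_cderiv g rho1); auto. rewrite Cmod_circle; lra.
  - intros t _. apply (pcont_comp (fun w => g w * (Ci * w))%C (circle rho)); [apply pcont_circle|].
    apply ccont_mult; [apply Hc; rewrite Cmod_circle; lra|].
    apply ccont_mult; [apply ccont_const|apply ccont_id].
Qed.

Section Winding.

Variables al be : R.
Hypothesis al_be_small : al ^ 2 + be ^ 2 < 1.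

Let X t := 1 - (al * cos t + be * sin t).
Let Y t := al * sin t - be * cos t.

Lemma winding_X_pos t : 0 < X t.
Proof.
  unfold X. pose proof (sin2_cos2 t). unfold Rsqr in H.
  assert ((al * cos t + be * sin t) ^ 2 <= al ^ 2 + be ^ 2).
  { assert (0 <= (al * sin t - be * cos t) ^ 2) by apply pow2_ge_0. nra. }
  nra.
Qed.

(** For [z = rho (al + i be)] and [w = rho e^(it)] one has [w - z = (X + i Y) w]
    ([winding_integrand]), so the two parts of [i w / (w - z)] are the derivatives of
    [ln |X + i Y|] and [t + arg (X + i Y)], which are [2 PI]-periodic up to the term [t]. *)
Lemma winding_re_int : is_RInt (fun t => Y t / (X t ^ 2 + Y t ^ 2)) 0 (2 * PI) 0.
Proof.
  assert (K := @is_RInt_derive R_CompleteNormedModule (fun t => ln (X t ^ 2 + Y t ^ 2) / 2)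
    (fun t => Y t / (X t ^ 2 + Y t ^ 2)) 0 (2 * PI)).
  cbv beta in K.
  match type of K with context [is_RInt _ _ _ ?v] => replace v with 0 in K end.
  2: unfold X, Y; rewrite cos_2PI, sin_2PI, cos_0, sin_0; unfold minus, plus, opp; simpl; ring.
  apply K; intros t _; pose proof (winding_X_pos t) as HX;
    assert (HD : X t ^ 2 + Y t ^ 2 > 0) by nra; unfold X, Y in *.
  - auto_derive; [lra|]. field. lra.
  - apply (@ex_derive_continuous R_AbsRing R_NormedModule). auto_derive. lra.
Qed.

Lemma winding_im_int : is_RInt (fun t => X t / (X t ^ 2 + Y t ^ 2)) 0 (2 * PI) (2 * PI).
Proof.
  assert (K := @is_RInt_derive R_CompleteNormedModule (fun t => t + atan (Y t / X t))
    (fun t => X t / (X t ^ 2 + Y t ^ 2)) 0 (2 * PI)).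
  cbv beta in K.
  match type of K with context [is_RInt _ _ _ ?v] => replace v with (2 * PI) in K end.
  2: unfold X, Y; rewrite cos_2PI, sin_2PI, cos_0, sin_0; unfold minus, plus, opp; simpl; ring.
  apply K; intros t _; pose proof (winding_X_pos t) as HX;
    assert (HD : X t ^ 2 + Y t ^ 2 > 0) by nra; unfold X, Y in *.
  - auto_derive; [lra|]. field. lra.
  - apply (@ex_derive_continuous R_AbsRing R_NormedModule). auto_derive. lra.
Qed.

Lemma winding_integrand rho t : 0 < rho ->
  (/ (circle rho t - RtoC rho * (al, be)) * (Ci * circle rho t))%C =
  (Y t / (X t ^ 2 + Y t ^ 2), X t / (X t ^ 2 + Y t ^ 2)).
Proof.
  intros Hr. pose proof (winding_X_pos t) as HX.
  assert (Hw : (circle rho t - RtoC rho * (al, be))%C = ((X t, Y t) * circle rho t)%C).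
  { unfold circle, expi, X, Y, Cminus, Cplus, Copp, Cmult, RtoC. simpl.
    pose proof (sin2_cos2 t) as E. unfold Rsqr in E.
    assert (E1 : rho * al * (sin t * sin t + cos t * cos t) = rho * al) by (rewrite E; ring).
    assert (E2 : rho * be * (sin t * sin t + cos t * cos t) = rho * be) by (rewrite E; ring).
    f_equal; nra. }
  assert (Hc : circle rho t <> RtoC 0) by (apply Cmod_gt_0; rewrite Cmod_circle; lra).
  assert (HXY : (X t, Y t) <> RtoC 0) by (intros E; injection E; lra).
  rewrite Hw. replace (/ ((X t, Y t) * circle rho t) * (Ci * circle rho t))%C with (Ci / (X t, Y t))%C
    by (field; auto).
  unfold Cdiv, Cinv, Cmult, Ci. simpl. f_equal; field; nra.
Qed.

End Winding.

Lemma circle_int_winding rho z : 0 < rho -> Cmod z < rho ->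
  circle_int rho (fun w => / (w - z))%C = (RtoC (2 * PI) * Ci)%C.
Proof.
  intros Hr Hz.
  set (al := fst z / rho). set (be := snd z / rho).
  assert (Hab : al ^ 2 + be ^ 2 < 1).
  { assert (Cmod z ^ 2 < rho ^ 2) by (pose proof (Cmod_ge_0 z); nra).
    rewrite Cmod2_alt in H.
    assert (E : al ^ 2 + be ^ 2 = (fst z ^ 2 + snd z ^ 2) / rho ^ 2) by (unfold al, be; field; lra).
    rewrite E. apply (Rmult_lt_reg_r (rho ^ 2)); [nra|].
    unfold Rdiv. rewrite Rmult_assoc, Rinv_l, Rmult_1_r, Rmult_1_l by (apply pow_nonzero; lra). exact H. }
  assert (Ez : z = (RtoC rho * (al, be))%C)
    by (unfold al, be, Cmult, RtoC; destruct z as [zx zy]; simpl; f_equal; field; lra).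
  unfold circle_int. rewrite Ez.
  rewrite (CInt_ext _ _ _ _ (fun t _ => winding_integrand al be Hab rho t Hr)).
  apply is_CInt_unique.
  replace (RtoC (2 * PI) * Ci)%C with (0, 2 * PI) by (unfold RtoC, Ci, Cmult; simpl; f_equal; ring).
  apply is_RInt_fct_extend_pair; [apply winding_re_int|apply winding_im_int]; exact Hab.
Qed.

Definition on_circle (rho : R) (k : C -> C) : Prop := forall t, ccont k (circle rho t).

Lemma on_circle_minus rho k1 k2 : on_circle rho k1 -> on_circle rho k2 ->
  on_circle rho (fun w => k1 w - k2 w)%C.
Proof. intros H1 H2 t. apply ccont_minus; auto. Qed.

Lemma on_circle_mult rho k1 k2 : on_circle rho k1 -> on_circle rho k2 ->
  on_circle rho (fun w => k1 w * k2 w)%C.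
Proof. intros H1 H2 t. apply ccont_mult; auto. Qed.

Lemma on_circle_const rho c : on_circle rho (fun _ => c).
Proof. intros t. apply ccont_const. Qed.

Lemma on_circle_id rho : on_circle rho (fun w => w).
Proof. intros t. apply ccont_id. Qed.

Lemma on_circle_inv_sub rho a : Cmod a < rho -> on_circle rho (fun w => / (w - a))%C.
Proof.
  intros Ha t. apply ccont_inv_sub. intros E. apply (circle_sub_neq0 rho t a Ha).
  rewrite E. ring.
Qed.

Lemma circle_int_minus rho k1 k2 : on_circle rho k1 -> on_circle rho k2 ->
  circle_int rho (fun w => k1 w - k2 w)%C = (circle_int rho k1 - circle_int rho k2)%C.
Proof.
  intros H1 H2. unfold circle_int.
  rewrite <- CInt_minus by (apply ex_circle_int; auto). apply CInt_ext. intros; ring.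
Qed.

Lemma circle_int_scal rho c k : on_circle rho k ->
  circle_int rho (fun w => c * k w)%C = (c * circle_int rho k)%C.
Proof.
  intros H. unfold circle_int.
  rewrite <- CInt_scal by (apply ex_circle_int; auto). apply CInt_ext. intros; ring.
Qed.

Lemma circle_int_ext rho k1 k2 : (forall t, k1 (circle rho t) = k2 (circle rho t)) ->
  circle_int rho k1 = circle_int rho k2.
Proof. intros H. unfold circle_int. apply CInt_ext. intros t _. rewrite H. reflexivity. Qed.

Lemma circle_int_norm_le rho k M : 0 <= rho -> on_circle rho k ->
  (forall t, 0 <= t <= 2 * PI -> Cmod (k (circle rho t)) <= M) ->
  Cmod (circle_int rho k) <= 2 * PI * (rho * M).
Proof.
  intros Hr Hk HM. unfold circle_int.
  replace (2 * PI * (rho * M)) with ((2 * PI - 0) * (M * rho)) by ring.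
  apply CInt_norm_le; [pose proof PI_RGT_0; lra| |apply ex_circle_int; auto].
  intros t Ht. rewrite Cmod_mult, Cmod_mult, Cmod_Ci, Cmod_circle by auto.
  rewrite Rmult_1_l. apply Rmult_le_compat_r; auto.
Qed.

Definition divided_diff (f : C -> C) (z w : C) : C :=
  if Req_EM_T (Cmod (w - z)) 0 then C_derive f z else ((f w - f z) / (w - z))%C.

Lemma divided_diff_at f z : divided_diff f z z = C_derive f z.
Proof.
  unfold divided_diff. destruct (Req_EM_T _ _) as [E|E]; auto.
  exfalso. apply E. replace (z - z)%C with (RtoC 0) by ring. apply Cmod_0.
Qed.

Lemma divided_diff_neq f z w : w <> z -> divided_diff f z w = ((f w - f z) / (w - z))%C.
Proof.
  intros H. unfold divided_diff. destruct (Req_EM_T _ _) as [E|E]; auto.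
  exfalso. apply H, Cmod_minus_eq0, E.
Qed.

Section CauchyFormula.

Variables (f : C -> C) (Rad : R).
Hypothesis f_holo : holomorphic_on_disk Rad f.

Lemma on_circle_holo rho : 0 <= rho < Rad -> on_circle rho f.
Proof.
  intros Hr t. eapply ccont_of_cderiv, cderiv_C_derive, f_holo. rewrite Cmod_circle; lra.
Qed.

Lemma divided_diff_cderiv z w : Cmod w < Rad -> w <> z -> exists l, cderiv (divided_diff f z) w l.
Proof.
  intros Hw Hne. eexists.
  apply (cderiv_ext_loc (fun v => (f v + - f z) * / (v - z))%C _ _ _ (Cmod (w - z)));
    [apply Cmod_minus_gt0, Hne| |].
  - intros v Hv. rewrite divided_diff_neq; [unfold Cdiv; ring|].
    intros ->. replace (z - w)%C with (- (w - z))%C in Hv by ring. rewrite Cmod_opp in Hv. lra.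
  - apply cderiv_mult; [apply cderiv_plus; [apply cderiv_C_derive, f_holo, Hw|apply cderiv_const]|].
    apply cderiv_inv_sub, Hne.
Qed.

Lemma divided_diff_ccont z w : Cmod z < Rad -> Cmod w < Rad -> ccont (divided_diff f z) w.
Proof.
  intros Hz Hw. destruct (classic (w = z)) as [->|E].
  - intros eps Heps.
    destruct (cderiv_C_derive f z (f_holo z Hz) (eps / 2)) as [d [Hd H]]; [lra|].
    exists d. split; auto. intros v Hv. rewrite divided_diff_at.
    destruct (classic (v = z)) as [->|E].
    + rewrite divided_diff_at. replace (C_derive f z - C_derive f z)%C with (RtoC 0) by ring.
      rewrite Cmod_0. lra.
    + rewrite divided_diff_neq by auto. specialize (H v Hv).
      assert (Hp := Cmod_minus_gt0 v z E).
      replace ((f v - f z) / (v - z) - C_derive f z)%C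
        with ((f v - f z - (v - z) * C_derive f z) / (v - z))%C by (field; apply Cminus_neq0; auto).
      rewrite Cmod_div by (apply Cminus_neq0; auto).
      apply Rle_lt_trans with (eps / 2); [|lra].
      unfold Rdiv. apply Rmult_le_reg_r with (Cmod (v - z)); auto.
      rewrite Rmult_assoc, Rinv_l by lra. lra.
  - destruct (divided_diff_cderiv z w Hw E) as [l Hl]. eapply ccont_of_cderiv, Hl.
Qed.

Lemma cauchy_formula rho z : 0 < rho < Rad -> Cmod z < rho ->
  circle_int rho (fun w => f w * / (w - z))%C = (RtoC (2 * PI) * Ci * f z)%C.
Proof.
  intros Hr Hz.
  set (rho1 := (rho + Rad) / 2).
  assert (Hzero : circle_int rho (divided_diff f z) = RtoC 0).
  { apply (cauchy_circle _ rho rho1); [unfold rho1; lra| |].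
    - intros w Hw. apply divided_diff_ccont; unfold rho1 in *; lra.
    - intros a b c d Hab Hcd Hin. apply (goursat_punctured _ z); auto.
      + intros w Hw. specialize (Hin w Hw). apply divided_diff_ccont; unfold rho1 in *; lra.
      + intros w Hw Hne. specialize (Hin w Hw). apply divided_diff_cderiv; auto. unfold rho1 in *; lra. }
  rewrite (circle_int_ext rho _ (fun w => f w * / (w - z) - f z * / (w - z))%C) in Hzero.
  2: { intros t. rewrite divided_diff_neq by (intros E; apply (circle_sub_neq0 rho t z Hz); rewrite E; ring).
       unfold Cdiv. ring. }
  assert (Hinv := on_circle_inv_sub rho z Hz).
  rewrite circle_int_minus, circle_int_scal, circle_int_winding in Hzero; try lra; auto.
  - apply (f_equal (fun u => u + RtoC (2 * PI) * Ci * f z)%C) in Hzero.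
    rewrite Cplus_0_l in Hzero. rewrite <- Hzero. ring.
  - apply on_circle_mult; [apply on_circle_holo; lra|exact Hinv].
  - intros t. apply ccont_mult; [apply ccont_const|apply Hinv].
Qed.

End CauchyFormula.

(** * Cauchy estimates *)

Definition cauchy_int (f : C -> C) (rho : R) (k : C -> C) : C :=
  (/ (RtoC (2 * PI) * Ci) * circle_int rho (fun w => f w * k w))%C.

Lemma two_PI_Ci_neq0 : (RtoC (2 * PI) * Ci)%C <> RtoC 0.
Proof.
  apply Cmod_gt_0. rewrite Cmod_mult, Cmod_Ci, Cmod_R, Rabs_pos_eq; pose proof PI_RGT_0; lra.
Qed.

Lemma circle_inv_sub_le rho t a D : 0 < D -> D <= rho - Cmod a -> Cmod (/ (circle rho t - a))%C <= / D.
Proof.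
  intros HD HDa. pose proof (Cmod_ge_0 a).
  pose proof (Cmod_rev_triangle (circle rho t) a). rewrite Cmod_circle in H0 by lra.
  rewrite Cmod_inv by (apply circle_sub_neq0; lra).
  apply Rinv_le_contravar; lra.
Qed.

Ltac solve_on_circle :=
  repeat (apply on_circle_minus || apply on_circle_mult || apply on_circle_const
          || apply on_circle_id || apply on_circle_inv_sub
          || (eapply on_circle_holo; [eassumption|lra]));
  auto; try lra.

Section CauchyEstimates.

Variables (f : C -> C) (Rad rho Mf : R).
Hypothesis f_holo : holomorphic_on_disk Rad f.
Hypothesis rho_pos : 0 < rho < Rad.
Hypothesis f_bound : forall t, 0 <= t <= 2 * PI -> Cmod (f (circle rho t)) <= Mf.

Lemma cauchy_int_inv_sub z : Cmod z < rho -> cauchy_int f rho (fun w => / (w - z))%C = f z.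
Proof.
  intros Hz. unfold cauchy_int. rewrite (cauchy_formula f Rad) by auto.
  field. split; apply Cmod_gt_0; [rewrite Cmod_Ci|rewrite Cmod_R, Rabs_pos_eq]; pose proof PI_RGT_0; lra.
Qed.

Lemma cauchy_int_minus k1 k2 : on_circle rho k1 -> on_circle rho k2 ->
  cauchy_int f rho (fun w => k1 w - k2 w)%C = (cauchy_int f rho k1 - cauchy_int f rho k2)%C.
Proof.
  intros H1 H2. unfold cauchy_int.
  rewrite (circle_int_ext rho _ (fun w => f w * k1 w - f w * k2 w)%C) by (intros; ring).
  rewrite circle_int_minus by solve_on_circle. ring.
Qed.

Lemma cauchy_int_scal c k : on_circle rho k ->
  cauchy_int f rho (fun w => c * k w)%C = (c * cauchy_int f rho k)%C.
Proof.
  intros H. unfold cauchy_int.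
  rewrite (circle_int_ext rho _ (fun w => c * (f w * k w))%C) by (intros; ring).
  rewrite circle_int_scal by solve_on_circle. ring.
Qed.

Lemma cauchy_int_ext k1 k2 : (forall t, k1 (circle rho t) = k2 (circle rho t)) ->
  cauchy_int f rho k1 = cauchy_int f rho k2.
Proof. intros H. unfold cauchy_int. f_equal. apply circle_int_ext. intros t. rewrite H. reflexivity. Qed.

Lemma cauchy_int_norm_le k M : on_circle rho k ->
  (forall t, 0 <= t <= 2 * PI -> Cmod (k (circle rho t)) <= M) ->
  Cmod (cauchy_int f rho k) <= rho * Mf * M.
Proof.
  intros Hk HM. unfold cauchy_int. pose proof PI_RGT_0.
  rewrite Cmod_mult, Cmod_inv by apply two_PI_Ci_neq0.
  rewrite Cmod_mult, Cmod_Ci, Cmod_R, Rabs_pos_eq, Rmult_1_r by lra.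
  apply Rmult_le_reg_l with (2 * PI); [lra|].
  rewrite <- Rmult_assoc, Rinv_r, Rmult_1_l by lra.
  replace (2 * PI * (rho * Mf * M)) with (2 * PI * (rho * (Mf * M))) by ring.
  apply circle_int_norm_le; [lra|solve_on_circle|].
  intros t Ht. rewrite Cmod_mult. specialize (f_bound t Ht). specialize (HM t Ht).
  apply Rmult_le_compat; auto; apply Cmod_ge_0.
Qed.

Definition taylor_coef1 z := cauchy_int f rho (fun w => / (w - z) * / (w - z))%C.
Definition taylor_coef2 z := cauchy_int f rho (fun w => / (w - z) * / (w - z) * / (w - z))%C.

Lemma cauchy_bound_nonneg : 0 <= Mf.
Proof. pose proof PI_RGT_0. pose proof (Cmod_ge_0 (f (circle rho 0))). pose proof (f_bound 0). lra. Qed.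

Lemma taylor2_remainder_eq z h : Cmod z < rho -> Cmod (z + h) < rho ->
  (f (z + h) - f z - h * taylor_coef1 z - h * h * taylor_coef2 z)%C =
  cauchy_int f rho (fun w => h * h * h * (/ (w - z) * / (w - z) * / (w - z) * / (w - (z + h))))%C.
Proof.
  intros Hz Hzh.
  rewrite <- (cauchy_int_inv_sub (z + h)), <- (cauchy_int_inv_sub z) by auto.
  unfold taylor_coef1, taylor_coef2.
  rewrite <- !cauchy_int_scal, <- !cauchy_int_minus by solve_on_circle.
  apply cauchy_int_ext. intros t.
  pose proof (circle_sub_neq0 rho t z Hz). pose proof (circle_sub_neq0 rho t (z + h) Hzh).
  field. auto.
Qed.

Lemma taylor_coef1_increment_eq z h : Cmod z < rho -> Cmod (z + h) < rho ->
  (taylor_coef1 (z + h) - taylor_coef1 z - RtoC 2 * h * taylor_coef2 z)%C =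
  cauchy_int f rho (fun w => h * h * (RtoC 3 * (w - z) - RtoC 2 * h)
    * (/ (w - z) * / (w - z) * / (w - z)) * (/ (w - (z + h)) * / (w - (z + h))))%C.
Proof.
  intros Hz Hzh. unfold taylor_coef1, taylor_coef2.
  rewrite <- !cauchy_int_scal, <- !cauchy_int_minus by solve_on_circle.
  apply cauchy_int_ext. intros t.
  pose proof (circle_sub_neq0 rho t z Hz). pose proof (circle_sub_neq0 rho t (z + h) Hzh).
  field. auto.
Qed.

Section AwayFromCircle.

Variables (z h : C) (D : R).
Hypothesis D_pos : 0 < D.
Hypothesis z_inside : D <= rho - Cmod z.
Hypothesis h_small : Cmod h <= D / 2.

Let zh_inside : D / 2 <= rho - Cmod (z + h).
Proof. pose proof (Cmod_triangle z h). lra. Qed.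

Let inv_z_le t : Cmod (/ (circle rho t - z))%C <= / D.
Proof. apply circle_inv_sub_le; auto. Qed.

Let inv_zh_le t : Cmod (/ (circle rho t - (z + h)))%C <= / (D / 2).
Proof. apply circle_inv_sub_le; [lra|auto]. Qed.

Lemma taylor2_remainder_le :
  Cmod (f (z + h) - f z - h * taylor_coef1 z - h * h * taylor_coef2 z)%C
  <= rho * Mf * (Cmod h ^ 3 * (2 / D ^ 4)).
Proof.
  pose proof (Cmod_ge_0 z).
  rewrite taylor2_remainder_eq by lra.
  apply cauchy_int_norm_le; [solve_on_circle|].
  intros t _.
  replace (Cmod h ^ 3 * (2 / D ^ 4)) with (Cmod h * Cmod h * Cmod h * (/ D * / D * / D * / (D / 2)))
    by (field; lra).
  repeat apply Cmod_mult_le; auto; lra.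
Qed.

Lemma taylor_coef1_increment_le :
  Cmod (taylor_coef1 (z + h) - taylor_coef1 z - RtoC 2 * h * taylor_coef2 z)%C
  <= rho * Mf * (Cmod h ^ 2 * (28 * rho / D ^ 5)).
Proof.
  pose proof (Cmod_ge_0 z).
  rewrite taylor_coef1_increment_eq by lra.
  apply cauchy_int_norm_le; [solve_on_circle|].
  intros t _.
  assert (Hnum : Cmod (RtoC 3 * (circle rho t - z) - RtoC 2 * h)%C <= 7 * rho).
  { replace (RtoC 3 * (circle rho t - z) - RtoC 2 * h)%C
      with (RtoC 3 * (circle rho t + - z) + - (RtoC 2 * h))%C by ring.
    eapply Rle_trans; [apply Cmod_triangle|].
    rewrite Cmod_opp, !Cmod_mult, !Cmod_R, (Rabs_pos_eq 3), (Rabs_pos_eq 2) by lra.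
    pose proof (Cmod_triangle (circle rho t) (- z)). rewrite Cmod_opp, Cmod_circle in H0 by lra.
    lra. }
  replace (Cmod h ^ 2 * (28 * rho / D ^ 5))
    with (Cmod h * Cmod h * (7 * rho) * (/ D * / D * / D) * (/ (D / 2) * / (D / 2))) by (field; lra).
  repeat apply Cmod_mult_le; auto; lra.
Qed.

Lemma taylor_coef2_le : Cmod (taylor_coef2 z) <= rho * Mf * (/ D * / D * / D).
Proof.
  pose proof (Cmod_ge_0 z).
  apply cauchy_int_norm_le; [solve_on_circle|].
  intros t _. repeat apply Cmod_mult_le; auto.
Qed.

End AwayFromCircle.

Lemma C_derive_taylor_coef1 z : Cmod z < rho -> C_derive f z = taylor_coef1 z.
Proof.
  intros Hz. apply C_derive_of_cderiv.
  set (D := rho - Cmod z). assert (HD : 0 < D) by (unfold D; lra).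
  pose proof cauchy_bound_nonneg as HM.
  assert (HK : 0 <= rho * Mf * (2 / D ^ 4) * (D / 2) + rho * Mf * (/ D * / D * / D)).
  { assert (0 < / D) by (apply Rinv_0_lt_compat, HD).
    assert (0 < D ^ 4) by (apply pow_lt, HD).
    assert (0 <= rho * Mf) by nra. assert (0 <= 2 / D ^ 4) by (apply Rdiv_le_0_compat; lra).
    assert (0 <= / D * / D * / D) by (repeat apply Rmult_le_pos; lra).
    apply Rplus_le_le_0_compat; repeat first [lra | apply Rmult_le_pos]. }
  apply (cderiv_of_quadratic_bound _ _ _ (D / 2) _ ltac:(lra) HK).
  intros h Hh.
  assert (E1 := taylor2_remainder_le z h D HD ltac:(unfold D; lra) Hh).
  assert (E2 := taylor_coef2_le z D HD ltac:(unfold D; lra)).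
  replace (f (z + h) - f z - h * taylor_coef1 z)%C with
    ((f (z + h) - f z - h * taylor_coef1 z - h * h * taylor_coef2 z) + h * h * taylor_coef2 z)%C by ring.
  eapply Rle_trans; [apply Cmod_triangle|]. rewrite !Cmod_mult.
  pose proof (Cmod_ge_0 h).
  assert (0 <= rho * Mf * (2 / D ^ 4))
    by (apply Rmult_le_pos; [nra|apply Rdiv_le_0_compat; [lra|apply pow_lt; lra]]).
  assert (A1 : rho * Mf * (Cmod h ^ 3 * (2 / D ^ 4)) <= rho * Mf * (2 / D ^ 4) * (D / 2) * Cmod h ^ 2).
  { replace (rho * Mf * (Cmod h ^ 3 * (2 / D ^ 4))) with (rho * Mf * (2 / D ^ 4) * Cmod h * Cmod h ^ 2)
      by ring.
    apply Rmult_le_compat_r; [apply pow2_ge_0|]. apply Rmult_le_compat_l; lra. }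
  assert (A2 : Cmod h * Cmod h * Cmod (taylor_coef2 z) <= rho * Mf * (/ D * / D * / D) * Cmod h ^ 2).
  { replace (Cmod h * Cmod h * Cmod (taylor_coef2 z)) with (Cmod (taylor_coef2 z) * Cmod h ^ 2) by ring.
    apply Rmult_le_compat_r; [apply pow2_ge_0|exact E2]. }
  rewrite Rmult_plus_distr_r. lra.
Qed.

Lemma C_derive2_taylor_coef2 z : Cmod z < rho -> C_derive (C_derive f) z = (RtoC 2 * taylor_coef2 z)%C.
Proof.
  intros Hz. apply C_derive_of_cderiv.
  set (D := rho - Cmod z). assert (HD : 0 < D) by (unfold D; lra).
  pose proof cauchy_bound_nonneg as HM.
  apply (cderiv_ext_loc taylor_coef1 _ _ _ D HD).
  { intros w Hw. symmetry. apply C_derive_taylor_coef1.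
    replace w with ((w - z) + z)%C by ring. pose proof (Cmod_triangle (w - z) z). unfold D in Hw. lra. }
  apply (cderiv_of_quadratic_bound _ _ _ (D / 2) (rho * Mf * (28 * rho / D ^ 5))); [lra| |].
  - assert (0 <= 28 * rho / D ^ 5) by (apply Rdiv_le_0_compat; [lra|apply pow_lt; lra]).
    apply Rmult_le_pos; [nra|auto].
  - intros h Hh.
    replace (taylor_coef1 (z + h) - taylor_coef1 z - h * (RtoC 2 * taylor_coef2 z))%C
      with (taylor_coef1 (z + h) - taylor_coef1 z - RtoC 2 * h * taylor_coef2 z)%C by ring.
    eapply Rle_trans; [apply (taylor_coef1_increment_le z h D HD ltac:(unfold D; lra) Hh)|].
    right. ring.
Qed.

End CauchyEstimates.

Definition taylor2_rem (f : C -> C) (z h : C) : C :=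
  (f (z + h) - f z - h * C_derive f z - h * h * C_derive (C_derive f) z / RtoC 2)%C.

Lemma taylor2_uniform (Rad r : R) (f : C -> C) : holomorphic_on_disk Rad f -> 0 < r < Rad ->
  exists A B eta, 0 < eta /\ 0 <= A /\
    (forall z, Cmod z <= r -> Cmod (C_derive (C_derive f) z) <= B) /\
    (forall z h, Cmod z <= r -> Cmod h <= eta -> Cmod (taylor2_rem f z h) <= A * Cmod h ^ 3).
Proof.
  intros Hf Hr.
  set (rho := (r + Rad) / 2). assert (Hrho : 0 < rho < Rad) by (unfold rho; lra).
  set (D := rho - r). assert (HD : 0 < D) by (unfold D, rho; lra).
  destruct (pcont_bounded (fun t => f (circle rho t)) 0 (2 * PI)) as [Mf [HM0 HM]].
  { pose proof PI_RGT_0. lra. }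
  { intros t _. apply (pcont_comp f (circle rho)); [apply pcont_circle|].
    apply (on_circle_holo f Rad); auto; lra. }
  exists (rho * Mf * (2 / D ^ 4)), (2 * (rho * Mf * (/ D * / D * / D))), (D / 2).
  assert (0 < D ^ 4) by (apply pow_lt, HD).
  repeat split; [lra|apply Rmult_le_pos; [nra|apply Rdiv_le_0_compat; lra]| |].
  - intros z Hz. rewrite (C_derive2_taylor_coef2 f Rad rho Mf Hf Hrho HM z) by (unfold rho; lra).
    rewrite Cmod_mult, Cmod_R, Rabs_pos_eq by lra.
    apply Rmult_le_compat_l; [lra|]. apply (taylor_coef2_le f Rad rho Mf Hf Hrho HM z D HD). unfold D; lra.
  - intros z h Hz Hh. unfold taylor2_rem.
    assert (Hz' : Cmod z < rho) by (unfold rho; lra).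
    rewrite (C_derive_taylor_coef1 f Rad rho Mf Hf Hrho HM z Hz'),
      (C_derive2_taylor_coef2 f Rad rho Mf Hf Hrho HM z Hz').
    replace (h * h * (RtoC 2 * taylor_coef2 f rho z) / RtoC 2)%C with (h * h * taylor_coef2 f rho z)%C
      by (field; apply RtoC_neq0; lra).
    eapply Rle_trans;
      [apply (taylor2_remainder_le f Rad rho Mf Hf Hrho HM z h D HD); [unfold D; lra|exact Hh]|].
    right. ring.
Qed.

(** * The q-difference operator *)

Lemma Dp_expansion p f z : z <> RtoC 0 -> p <> 1 ->
  Dp p f z = (C_derive f z + RtoC (p - 1) * z * C_derive (C_derive f) z / RtoC 2
              + taylor2_rem f z (RtoC (p - 1) * z) / (RtoC (p - 1) * z))%C.
Proof.
  intros Hz Hp. unfold Dp.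
  destruct (Req_EM_T (Cmod z) 0) as [E|_]; [apply Cmod_eq_0 in E; contradiction|].
  unfold taylor2_rem.
  replace (RtoC p * z)%C with (z + RtoC (p - 1) * z)%C by (rewrite RtoC_minus; ring).
  assert (RtoC (p - 1) <> RtoC 0) by (apply RtoC_neq0; lra).
  field. repeat split; auto.
Qed.

Lemma Lq_sub_L1_expansion q f z : z <> RtoC 0 -> 1 < q ->
  (Lq q f z - L1 f z =
   (1 - z) * (RtoC ((q - 1) / 2) * z * C_derive (C_derive f) z
     + RtoC (q / (q - 1)) * (taylor2_rem f z (RtoC (q - 1) * z) / (RtoC (q - 1) * z)
                             - taylor2_rem f z (RtoC (/ q - 1) * z) / (RtoC (/ q - 1) * z))))%C.
Proof.
  intros Hz Hq. unfold Lq, L1.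
  assert (/ q < 1) by (rewrite <- Rinv_1; apply Rinv_lt_contravar; lra).
  rewrite !Dp_expansion by (auto; lra).
  set (R1 := taylor2_rem f z (RtoC (q - 1) * z)). set (R2 := taylor2_rem f z (RtoC (/ q - 1) * z)).
  rewrite RtoC_div, RtoC_div, !RtoC_minus, RtoC_inv by lra.
  assert (Hq0 : RtoC q <> RtoC 0) by (apply RtoC_neq0; lra).
  assert (Hq1 : (RtoC q - RtoC 1)%C <> RtoC 0) by (rewrite <- RtoC_minus; apply RtoC_neq0; lra).
  assert (Hqi : (/ RtoC q - RtoC 1)%C <> RtoC 0)
    by (rewrite <- RtoC_inv, <- RtoC_minus by lra; apply RtoC_neq0; lra).
  field. repeat split; auto. rewrite <- RtoC_minus. apply RtoC_neq0. lra.
Qed.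

Lemma Lq_sub_L1_at_0 q f : 1 < q -> (Lq q f (RtoC 0) - L1 f (RtoC 0))%C = RtoC 0.
Proof.
  intros Hq. unfold Lq, L1, Dp.
  destruct (Req_EM_T (Cmod 0) 0) as [_|E]; [|rewrite Cmod_0 in E; contradiction].
  field. apply RtoC_neq0. lra.
Qed.

Lemma Cmod_div_le_sq (T h : C) A : h <> RtoC 0 -> Cmod T <= A * Cmod h ^ 3 ->
  Cmod (T / h)%C <= A * Cmod h ^ 2.
Proof.
  intros Hh HT. assert (Hp : 0 < Cmod h) by (apply Cmod_gt_0, Hh).
  rewrite Cmod_div by exact Hh. apply Rmult_le_reg_r with (Cmod h); [exact Hp|].
  unfold Rdiv. rewrite Rmult_assoc, Rinv_l, Rmult_1_r by lra.
  replace (A * Cmod h ^ 2 * Cmod h) with (A * Cmod h ^ 3) by ring. exact HT.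
Qed.

Lemma q_steps_le q z : 1 < q ->
  Cmod (RtoC (q - 1) * z) <= (q - 1) * Cmod z /\ Cmod (RtoC (/ q - 1) * z) <= (q - 1) * Cmod z.
Proof.
  intros Hq. pose proof (Cmod_ge_0 z).
  assert (Hiq : 0 < 1 - / q <= q - 1).
  { assert (/ q < 1) by (rewrite <- Rinv_1; apply Rinv_lt_contravar; lra).
    assert (/ q * q = 1) by (field; lra). nra. }
  rewrite !Cmod_mult, !Cmod_R, Rabs_pos_eq, Rabs_left by lra. split; [lra|].
  replace (- (/ q - 1)) with (1 - / q) by ring. apply Rmult_le_compat_r; lra.
Qed.

Lemma Lq_sub_L1_le f z q r A B eta : 0 <= A -> Cmod z <= r -> 1 < q <= 2 -> (q - 1) * r <= eta ->
  Cmod (C_derive (C_derive f) z) <= B ->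
  (forall h, Cmod h <= eta -> Cmod (taylor2_rem f z h) <= A * Cmod h ^ 3) ->
  Cmod (Lq q f z - L1 f z)%C <= (q - 1) * ((1 + r) * (r * B / 2 + 4 * A * r ^ 2)).
Proof.
  intros HA Hz Hq Hqr HB HT.
  pose proof (Cmod_ge_0 z). pose proof (Cmod_ge_0 (C_derive (C_derive f) z)).
  assert (HS0 : 0 <= r * B / 2 + 4 * A * r ^ 2) by (pose proof (pow2_ge_0 r); nra).
  destruct (classic (z = RtoC 0)) as [->|Hz0].
  { rewrite Lq_sub_L1_at_0, Cmod_0 by lra. apply Rmult_le_pos; [lra|]. apply Rmult_le_pos; lra. }
  assert (Q : forall x, x <> 0 -> Cmod (RtoC x * z) <= (q - 1) * Cmod z ->
    Cmod (taylor2_rem f z (RtoC x * z) / (RtoC x * z))%C <= A * ((q - 1) * r) ^ 2).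
  { intros x Hx Hxz.
    assert (Cmod (RtoC x * z) <= (q - 1) * r)
      by (pose proof (Rmult_le_compat_l (q - 1) _ _ ltac:(lra) Hz); lra).
    eapply Rle_trans; [apply Cmod_div_le_sq; [apply Cmult_neq_0; [apply RtoC_neq0|]; auto|apply HT; lra]|].
    apply Rmult_le_compat_l; [auto|]. apply pow_incr. split; [apply Cmod_ge_0|auto]. }
  destruct (q_steps_le q z ltac:(lra)) as [Hh1 Hh2].
  assert (Hiq : / q <> 1) by (intros E; apply (f_equal Rinv) in E; rewrite Rinv_inv, Rinv_1 in E; lra).
  rewrite Lq_sub_L1_expansion by (auto; lra).
  set (X := (RtoC ((q - 1) / 2) * z * C_derive (C_derive f) z)%C).
  set (Y := (RtoC (q / (q - 1)) * (taylor2_rem f z (RtoC (q - 1) * z) / (RtoC (q - 1) * z)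
                                  - taylor2_rem f z (RtoC (/ q - 1) * z) / (RtoC (/ q - 1) * z)))%C).
  assert (HX : Cmod X <= (q - 1) * (r * B / 2)).
  { unfold X. rewrite !Cmod_mult, Cmod_R, Rabs_pos_eq by lra.
    replace ((q - 1) * (r * B / 2)) with ((q - 1) / 2 * (r * B)) by field.
    rewrite Rmult_assoc. apply Rmult_le_compat_l; [lra|]. apply Rmult_le_compat; lra. }
  assert (HY : Cmod Y <= (q - 1) * (4 * A * r ^ 2)).
  { unfold Y. rewrite Cmod_mult, Cmod_R, Rabs_pos_eq by (apply Rdiv_le_0_compat; lra).
    apply Rle_trans with (q / (q - 1) * (2 * (A * ((q - 1) * r) ^ 2))).
    - apply Rmult_le_compat_l; [apply Rdiv_le_0_compat; lra|].
      eapply Rle_trans; [apply Cmod_triangle|]. rewrite Cmod_opp.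
      pose proof (Q (q - 1) ltac:(lra) Hh1). pose proof (Q (/ q - 1) ltac:(lra) Hh2). lra.
    - replace (q / (q - 1) * (2 * (A * ((q - 1) * r) ^ 2))) with ((q - 1) * (q * (2 * A * r ^ 2)))
        by (field; lra).
      apply Rmult_le_compat_l; [lra|].
      assert (0 <= 2 * A * r ^ 2) by (pose proof (pow2_ge_0 r); nra). nra. }
  assert (H1z : Cmod (1 - z)%C <= 1 + r).
  { pose proof (Cmod_triangle 1 (- z)). rewrite Cmod_opp, Cmod_1 in H1. unfold Cminus. lra. }
  rewrite Cmod_mult.
  replace ((q - 1) * ((1 + r) * (r * B / 2 + 4 * A * r ^ 2)))
    with ((1 + r) * ((q - 1) * (r * B / 2) + (q - 1) * (4 * A * r ^ 2))) by ring.
  apply Rmult_le_compat; auto using Cmod_ge_0.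
  eapply Rle_trans; [apply Cmod_triangle|]. lra.
Qed.

Theorem mainTheorem4 (Rad : R) (f : C -> C) :
  1 < Rad -> holomorphic_on_disk Rad f ->
  forall r : R, 0 < r < Rad ->
  forall eps : R, 0 < eps ->
  exists delta : R, 0 < delta /\
    forall q : R, 1 < q < 1 + delta ->
    forall z : C, Cmod z <= r ->
      Cmod (Cminus (Lq q f z) (L1 f z)) < eps.
Proof.
  intros _ Hf r Hr eps Heps.
  destruct (taylor2_uniform Rad r f Hf Hr) as (A & B & eta & Heta & HA & HB & HT).
  assert (HB0 : 0 <= B) by (pose proof (Cmod_ge_0 (C_derive (C_derive f) 0)); specialize (HB 0);
    rewrite Cmod_0 in HB; lra).
  set (K := (1 + r) * (r * B / 2 + 4 * A * r ^ 2)).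
  assert (HK : 0 <= K) by (unfold K; pose proof (pow2_ge_0 r); apply Rmult_le_pos; nra).
  exists (Rmin 1 (Rmin (eta / r) (eps / (K + 1)))).
  split; [apply Rmin_pos; [lra|apply Rmin_pos; apply Rdiv_lt_0_compat; lra]|].
  intros q Hq z Hz.
  pose proof (Rmin_l 1 (Rmin (eta / r) (eps / (K + 1)))).
  pose proof (Rmin_r 1 (Rmin (eta / r) (eps / (K + 1)))).
  pose proof (Rmin_l (eta / r) (eps / (K + 1))). pose proof (Rmin_r (eta / r) (eps / (K + 1))).
  eapply Rle_lt_trans; [apply (Lq_sub_L1_le f z q r A B eta); auto; try lra|].
  - apply Rmult_le_reg_r with (/ r); [apply Rinv_0_lt_compat; lra|].
    rewrite Rmult_assoc, Rinv_r by lra. unfold Rdiv in *. lra.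
  - fold K. apply Rle_lt_trans with (eps / (K + 1) * K); [apply Rmult_le_compat_r; lra|].
    apply Rlt_le_trans with (eps / (K + 1) * (K + 1));
      [apply Rmult_lt_compat_l; [apply Rdiv_lt_0_compat|]; lra|].
    right. field. lra.
Qed.
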